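(* Let $\textnormal{R}\in\{\textnormal{ML},\textnormal{wML},\textnormal{C},\textnormal{CH}\}$, let $\varphi$ be a computable precise forecasting system, and let $\omega\in\Omega$ be a path that is $\textnormal{R}$-random for $\varphi$. Then $I_\textnormal{R}(\omega)=I_\varphi(\omega)$, where $I_\varphi(\omega)=\big[\liminf_{n\to\infty}\underline{\varphi}(\omega_{1:n}),\ \limsup_{n\to\infty}\overline{\varphi}(\omega_{1:n})\big]$.
   Context: $\mathcal{X}=\{0,1\}$; $\Omega=\mathcal{X}^{\mathbb{N}}$ is the set of paths $\omega=(\omega_1,\omega_2,\dots)$; $\mathbb{S}=\bigcup_{n\geq0}\mathcal{X}^n$ is the set of situations (finite binary strings), $\square$ the empty string, $|s|$ the length of $s$, $sx$ concatenation, $\omega_{1:n}=(\omega_1,\dots,\omega_n)$ with $\omega_{1:0}=\square$. $\mathcal{I}$ is the set of nonempty closed intervals $I\subseteq[0,1]$ (interval forecasts). A forecasting system is a map $\varphi:\mathbb{S}\to\mathcal{I}$; $\underline{\varphi}(s)=\min\varphi(s)$, $\overline{\varphi}(s)=\max\varphi(s)$; $\varphi$ is precise if $\underline\varphi=\overline\varphi$. An interval forecast $I$ is identified with the constant forecasting system $s\mapsto I$. A real map $r$ on a countable effectively encoded set $\mathcal D$ is computable if there is a recursive map $q:\mathcal{D}\times\mathbb{N}_0\to\mathbb{Q}$ with $|r(d)-q(d,n)|<2^{-n}$ for all $d,n$; it is lower semicomputable if there is a recursive $q:\mathcal{D}\times\mathbb{N}_0\to\mathbb{Q}$ with $q(d,n+1)\ge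 q(d,n)$ and $r(d)=\lim_n q(d,n)$. $\varphi$ is computable if $\underline\varphi$ and $\overline\varphi$ are computable. For a gamble $f:\mathcal X\to\mathbb R$ and $I\in\mathcal I$, $\overline{E}_I(f)=\max_{p\in I}[pf(1)+(1-p)f(0)]$. A real process $F:\mathbb S\to\mathbb R$ is a supermartingale for $\varphi$ if $\overline{E}_{\varphi(s)}\big(F(s\,\cdot)-F(s)\big)\le 0$ for all $s$; a test supermartingale if moreover $F\ge0$ and $F(\square)=1$. A multiplier process is a map $D$ from $\mathbb S$ to gambles; it generates $D^{\circledcirc}(x_1,\dots,x_n)=\prod_{k=0}^{n-1}D(x_{1:k})(x_{k+1})$; $D$ is lower semicomputable if $(s,x)\mapsto D(s)(x)$ is. Randomness notions (for a path $\omega$ and forecasting system $\varphi$): $\omega$ is ML-random for $\varphi$ if no lower semicomputable test supermartingale $T$ for $\varphi$ satisfies $\limsup_n T(\omega_{1:n})=\infty$; wML-random if no test supermartingale for $\varphi$ of the form $D^{\circledcirc}$ with $D$ a lower semicomputable multiplier process satisfies this; C-random if no computable test supermartingale for $\varphi$ satisfies this. $\omega$ is CH-random for $\varphi$ if for every recursive selection process $S:\mathbb S\to\{0,1\}$ with $\sum_{k=0}^{n-1}S(\omega_{1:k})\to\infty$ we have $\liminf_n \frac{\sum_{k=0}^{n-1}S(\omega_{1:k})[\omega_{k+1}-\underline\varphi(\omega_{1:k})]}{\sum_{k=0}^{n-1}S(\omega_{1:k})}\ge0$ and $\limsup_n \frac{\sum_{k=0}^{n-1}S(\omega_{1:k})[\omega_{k+1}-\overline\varphi(\omega_{1:k})]}{\sum_{k=0}^{n-1}S(\omega_{1:k})}\le0$.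 For a notion R, $\mathcal I_\textnormal{R}(\omega)=\{I\in\mathcal I:\omega \text{ is R-random for } I\}$ and $I_\textnormal{R}(\omega)=\bigcap_{I\in\mathcal I_\textnormal{R}(\omega)} I$. *)

From Stdlib Require Import Reals Lra Lia ZArith List.
From Coquelicot Require Import Coquelicot.
Import ListNotations.
Open Scope R_scope.

Inductive prf : Type :=
| PZero : prf
| PSucc : prf
| PProj : nat -> prf
| PComp : prf -> list prf -> prf
| PPrec : prf -> prf -> prf         (* primitive recursion on first argument *)
| PMu   : prf -> prf.               (* unbounded minimisation on first argument *)

(* big-step semantics: [peval f args y] means f(args) is defined and = y *)
Inductive peval : prf -> list nat -> nat -> Prop :=
| ev_zero : forall v, peval PZero v 0
| ev_succ : forall x v, peval PSucc (x :: v) (S x)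
| ev_proj : forall i v, peval (PProj i) v (nth i v 0%nat)
| ev_comp : forall f gs v ys y,
    Forall2 (fun g yg => peval g v yg) gs ys ->
    peval f ys y -> peval (PComp f gs) v y
| ev_prec0 : forall f g v y, peval f v y -> peval (PPrec f g) (0%nat :: v) y
| ev_precS : forall f g n v r y,
    peval (PPrec f g) (n :: v) r -> peval g (n :: r :: v) y ->
    peval (PPrec f g) (S n :: v) y
| ev_mu : forall f v n,
    peval f (n :: v) 0%nat ->
    (forall m, (m < n)%nat -> exists k, peval f (m :: v) (S k)) ->
    peval (PMu f) v n.

Definition recursive_nat (h : nat -> nat) : Prop :=
  exists t : prf, forall n, peval t [n] (h n).

Definition npair (a b : nat) : nat := (((a + b) * (a + b + 1)) / 2 + b)%nat.

(* situations (finite binary strings) as nat: a bijection *)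
Fixpoint code_sit (s : list bool) : nat :=
  match s with
  | [] => 0%nat
  | x :: s' => (2 * code_sit s' + (if x then 2 else 1))%nat
  end.

Definition b2n (x : bool) : nat := if x then 1%nat else 0%nat.

(* zig-zag bijection nat -> Z *)
Definition zz (m : nat) : Z :=
  if Nat.even m then Z.of_nat (m / 2) else (- Z.of_nat ((m + 1) / 2))%Z.

Definition qval (num den : nat) : R := IZR (zz num) / INR (S den).

(* (code : D -> nat is the effective encoding of D)                    *)

(* a recursive map q : D x N -> Q, given by recursive numerator/denominator codes *)
Definition recursive_Q {D : Type} (code : D -> nat) (q : D -> nat -> R) : Prop :=
  exists hn hd : nat -> nat, recursive_nat hn /\ recursive_nat hd /\
    forall d n, q d n = qval (hn (npair (code d) n)) (hd (npair (code d) n)).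

Definition computable_map {D : Type} (code : D -> nat) (r : D -> R) : Prop :=
  exists q : D -> nat -> R, recursive_Q code q /\
    forall d n, Rabs (r d - q d n) < / 2 ^ n.

Definition lower_semicomputable {D : Type} (code : D -> nat) (r : D -> R) : Prop :=
  exists q : D -> nat -> R, recursive_Q code q /\
    (forall d n, q d n <= q d (S n)) /\
    (forall d, Un_cv (q d) (r d)).

(* a path omega = (omega_1, omega_2, ...) is [om : nat -> bool] with omega_{k+1} = om k *)
Definition prefix (om : nat -> bool) (n : nat) : list bool := map om (seq 0 n).

(* a forecasting system phi is given by its lower and upper maps;
   phi(s) = [lo s, hi s] must be a nonempty closed subinterval of [0,1] *)
Definition is_FS (lo hi : list bool -> R) : Prop :=
  forall s, 0 <= lo s /\ lo s <= hi s /\ hi s <= 1.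

Definition precise (lo hi : list bool -> R) : Prop := forall s, lo s = hi s.

Definition computable_FS (lo hi : list bool -> R) : Prop :=
  computable_map code_sit lo /\ computable_map code_sit hi.

(* upper expectation  E_I(f) = max_{p in I} [p f(1) + (1-p) f(0)] *)
(* "E_[a,b](f) <= 0" written out: every p in [a,b] gives a value <= 0 *)
Definition upper_exp_le0 (a b : R) (f : bool -> R) : Prop :=
  forall p, a <= p <= b -> p * f true + (1 - p) * f false <= 0.

Definition supermartingale (lo hi : list bool -> R) (F : list bool -> R) : Prop :=
  forall s, upper_exp_le0 (lo s) (hi s) (fun x => F (s ++ [x]) - F s).

Definition test_supermartingale (lo hi : list bool -> R) (T : list bool -> R) : Prop :=
  supermartingale lo hi T /\ (forall s, 0 <= T s) /\ T [] = 1.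

Definition Dcirc (D : list bool -> bool -> R) (s : list bool) : R :=
  fold_right (fun k acc => D (firstn k s) (nth k s false) * acc) 1
             (seq 0 (length s)).

Definition code_sx (p : list bool * bool) : nat := npair (code_sit (fst p)) (b2n (snd p)).

Definition lsc_multiplier (D : list bool -> bool -> R) : Prop :=
  lower_semicomputable code_sx (fun p => D (fst p) (snd p)).

Definition unbounded_on (T : list bool -> R) (om : nat -> bool) : Prop :=
  LimSup_seq (fun n => T (prefix om n)) = p_infty.

Definition ML_random (lo hi : list bool -> R) (om : nat -> bool) : Prop :=
  ~ exists T, lower_semicomputable code_sit T /\ test_supermartingale lo hi T /\
              unbounded_on T om.

Definition wML_random (lo hi : list bool -> R) (om : nat -> bool) : Prop :=
  ~ exists D, lsc_multiplier D /\ test_supermartingale lo hi (Dcirc D) /\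
              unbounded_on (Dcirc D) om.

Definition C_random (lo hi : list bool -> R) (om : nat -> bool) : Prop :=
  ~ exists T, computable_map code_sit T /\ test_supermartingale lo hi T /\
              unbounded_on T om.

Definition recursive_selection (S : list bool -> bool) : Prop :=
  exists h : nat -> nat, recursive_nat h /\ forall s, h (code_sit s) = b2n (S s).

Definition sel (S : list bool -> bool) (s : list bool) : R := if S s then 1 else 0.

Definition sel_count (S : list bool -> bool) (om : nat -> bool) (n : nat) : R :=
  fold_right Rplus 0 (map (fun k => sel S (prefix om k)) (seq 0 n)).

Definition sel_sum (S : list bool -> bool) (f : list bool -> R) (om : nat -> bool)
  (n : nat) : R :=
  fold_right Rplus 0
    (map (fun k => sel S (prefix om k) * ((if om k then 1 else 0) - f (prefix om k)))
         (seq 0 n)).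

Definition CH_random (lo hi : list bool -> R) (om : nat -> bool) : Prop :=
  forall S, recursive_selection S ->
    is_lim_seq (sel_count S om) p_infty ->
    Rbar_le (Finite 0) (LimInf_seq (fun n => sel_sum S lo om n / sel_count S om n)) /\
    Rbar_le (LimSup_seq (fun n => sel_sum S hi om n / sel_count S om n)) (Finite 0).

Inductive notion := ML | wML | C | CH.

Definition random (Rn : notion) (lo hi : list bool -> R) (om : nat -> bool) : Prop :=
  match Rn with
  | ML => ML_random lo hi om
  | wML => wML_random lo hi om
  | C => C_random lo hi om
  | CH => CH_random lo hi om
  end.

(* interval forecast [a,b] (0 <= a <= b <= 1) seen as a constant forecasting system;
   I_R(om) = intersection of all [a,b] for which om is R-random: membership of x *)
Definition in_I_R (Rn : notion) (om : nat -> bool) (x : R) : Prop :=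
  forall a b, 0 <= a -> a <= b -> b <= 1 ->
    random Rn (fun _ => a) (fun _ => b) om -> a <= x <= b.

Definition in_I_phi (lo hi : list bool -> R) (om : nat -> bool) (x : R) : Prop :=
  Rbar_le (LimInf_seq (fun n => lo (prefix om n))) (Finite x) /\
  Rbar_le (Finite x) (LimSup_seq (fun n => hi (prefix om n))).

From Stdlib Require Import Reals List.
From Coquelicot Require Import Coquelicot.
From Stdlib Require Import Lia Lra ZArith Bool Classical.
Import ListNotations.

(* Suppose [om] is random for [[a, b]] as well as for [phi], but [liminf phi < a].  Comparing
   rational approximations of [phi] with a rational threshold gives a recursive selection
   rule that fires infinitely often along [om], and only where [phi <= u], for rationals
   [u < v <= a].  For CH randomness this is absurd: the selected average of [om - phi] is
   asymptotically [<= 0], while that of [om - a], smaller by at least [v - u], is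
   asymptotically [>= 0].  For the test-based notions, betting on outcome 1 against [phi] and
   on 0 against [[a, b]] on the selected rounds makes the product of the two capitals grow
   geometrically, so one of the two tests wins.  Hence [I_phi] lies in [I_R].

   Conversely, if [a < liminf phi], a recursive selection rule holds along [om] from some
   [n0] on, and only where [phi >= a].  A test for [[a, 1]] that wins on [om] becomes a test
   for [phi] that wins on [om] once it is kept at 1 off [om_{1:n0}], rescaled below 1 at
   [om_{1:n0}], and set to 0 as soon as the rule fails; for CH, only the forecasts along
   [om] matter.  So [om] is random for [[a, 1]], and symmetrically for [[0, b]] when
   [limsup phi < b]: no point outside [I_phi] lies in [I_R]. *)

Open Scope nat_scope.

(** * Recursive functions *)

Definition recursive (F : list nat -> nat) : Prop := exists t, forall v, peval t v (F v).
Definition recursive1 (f : nat -> nat) : Prop := recursive (fun v => f (nth 0 v 0)).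
Definition recursive2 (f : nat -> nat -> nat) : Prop :=
  recursive (fun v => f (nth 0 v 0) (nth 1 v 0)).
Definition recursive3 (f : nat -> nat -> nat -> nat) : Prop :=
  recursive (fun v => f (nth 0 v 0) (nth 1 v 0) (nth 2 v 0)).

Lemma recursive1_iff h : recursive1 h <-> recursive_nat h.
Proof.
  split.
  - intros [t Ht]; exists t; intro n; exact (Ht [n]).
  - intros [t Ht]; exists (PComp t [PProj 0]); intro v.
    apply ev_comp with (ys := [nth 0 v 0]); [repeat constructor | apply Ht].
Qed.

Lemma recursive_ext F G : recursive F -> (forall v, F v = G v) -> recursive G.
Proof. intros [t Ht] E; exists t; intro v; rewrite <- E; apply Ht. Qed.

Lemma recursive_proj i : recursive (fun v => nth i v 0).
Proof. exists (PProj i); intros; constructor. Qed.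

Lemma recursive_comp F Gs : recursive F -> List.Forall recursive Gs ->
  recursive (fun v => F (map (fun G => G v) Gs)).
Proof.
  intros [f Hf] HGs.
  assert (Hts : exists ts, List.Forall2 (fun t G => forall v, peval t v (G v)) ts Gs).
  { induction HGs as [|G Gs [t Ht] _ [ts Hts]]; [exists []; constructor|].
    exists (t :: ts); constructor; assumption. }
  destruct Hts as [ts Hts]; exists (PComp f ts); intro v.
  apply ev_comp with (ys := map (fun G => G v) Gs); [|apply Hf].
  clear HGs; induction Hts; constructor; auto.
Qed.

Lemma recursive1_app f A : recursive1 f -> recursive A -> recursive (fun v => f (A v)).
Proof. intros Hf HA; apply (recursive_comp _ [A] Hf); repeat apply List.Forall_cons; auto. Qed.

Lemma recursive2_app f A B : recursive2 f -> recursive A -> recursive B ->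
  recursive (fun v => f (A v) (B v)).
Proof.
  intros Hf HA HB; apply (recursive_comp _ [A; B] Hf); repeat apply List.Forall_cons; auto.
Qed.

Lemma recursive3_app f A B C : recursive3 f -> recursive A -> recursive B -> recursive C ->
  recursive (fun v => f (A v) (B v) (C v)).
Proof.
  intros Hf HA HB HC; apply (recursive_comp _ [A; B; C] Hf); repeat apply List.Forall_cons; auto.
Qed.

Lemma recursive1_S : recursive1 S.
Proof.
  exists (PComp PSucc [PProj 0]); intro v.
  apply ev_comp with (ys := [nth 0 v 0]); repeat constructor.
Qed.

Lemma recursive_const c : recursive (fun _ => c).
Proof.
  induction c; [exists PZero; constructor|].
  exact (recursive1_app S _ recursive1_S IHc).
Qed.

Fixpoint prim_rec (F G : list nat -> nat) (n y : nat) : nat :=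
  match n with 0 => F [y] | S n' => G [n'; prim_rec F G n' y; y] end.

Lemma recursive2_prim_rec F G : recursive F -> recursive G -> recursive2 (prim_rec F G).
Proof.
  intros [f Hf] [g Hg].
  assert (K : forall n y, peval (PPrec f g) [n; y] (prim_rec F G n y)).
  { induction n; intros y; [constructor; apply Hf | eapply ev_precS; eauto]. }
  exists (PComp (PPrec f g) [PProj 0; PProj 1]); intro v.
  apply ev_comp with (ys := [nth 0 v 0; nth 1 v 0]); [repeat constructor | apply K].
Qed.

Lemma recursive2_of_prim_rec F G f : recursive F -> recursive G ->
  (forall n y, prim_rec F G n y = f n y) -> recursive2 f.
Proof.
  intros HF HG E; eapply recursive_ext; [apply (recursive2_prim_rec F G HF HG)|].
  intro; apply E.
Qed.

Create HintDb recursive.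
#[export] Hint Resolve recursive1_S : recursive.

Ltac solve_recursive :=
  match goal with
  | |- recursive (fun v => nth ?i v 0) => apply recursive_proj
  | |- recursive (fun _ => ?c) => apply recursive_const
  | |- recursive (fun v => Nat.div (@?A v) 2) =>
      apply (recursive1_app (fun x => x / 2)); [solve [eauto with recursive] | solve_recursive]
  | |- recursive (fun v => ?f (@?A v) (@?B v) (@?C v)) =>
      apply (recursive3_app f); [solve [eauto with recursive] | solve_recursive ..]
  | |- recursive (fun v => ?f (@?A v) (@?B v)) =>
      apply (recursive2_app f); [solve [eauto with recursive] | solve_recursive ..]
  | |- recursive (fun v => ?f (@?A v)) =>
      apply (recursive1_app f); [solve [eauto with recursive] | solve_recursive]
  end.

Lemma recursive2_add : recursive2 Nat.add.
Proof.
  apply (recursive2_of_prim_rec (fun v => nth 0 v 0) (fun v => S (nth 1 v 0)));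
    [solve_recursive .. |].
  induction n; intros; simpl; auto.
Qed.
#[export] Hint Resolve recursive2_add : recursive.

Lemma recursive2_mul : recursive2 Nat.mul.
Proof.
  apply (recursive2_of_prim_rec (fun _ => 0) (fun v => nth 1 v 0 + nth 2 v 0));
    [solve_recursive .. |].
  induction n; intros; simpl; auto. rewrite IHn; lia.
Qed.
#[export] Hint Resolve recursive2_mul : recursive.

Lemma recursive2_swap f : recursive2 f -> recursive2 (fun x y => f y x).
Proof. intros Hf; unfold recursive2; solve_recursive. Qed.

Lemma recursive1_pred : recursive1 Nat.pred.
Proof.
  assert (H : recursive2 (prim_rec (fun _ => 0) (fun v => nth 0 v 0)))
    by (apply recursive2_prim_rec; solve_recursive).
  unfold recursive1; eapply recursive_ext.
  - apply (recursive2_app _ (fun v => nth 0 v 0) (fun _ => 0) H); solve_recursive.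
  - intros v; cbv beta; destruct (nth 0 v 0); reflexivity.
Qed.
#[export] Hint Resolve recursive1_pred : recursive.

Lemma recursive2_sub : recursive2 Nat.sub.
Proof.
  apply (recursive2_swap (fun y x => x - y)).
  apply (recursive2_of_prim_rec (fun v => nth 0 v 0) (fun v => Nat.pred (nth 1 v 0)));
    [solve_recursive .. |].
  induction n; intros; simpl; [lia|]. rewrite IHn; lia.
Qed.
#[export] Hint Resolve recursive2_sub : recursive.

Lemma recursive2_pow : recursive2 Nat.pow.
Proof.
  apply (recursive2_swap (fun y x => x ^ y)).
  apply (recursive2_of_prim_rec (fun _ => 1) (fun v => nth 2 v 0 * nth 1 v 0));
    [solve_recursive .. |].
  induction n; intros; simpl; try rewrite IHn; lia.
Qed.
#[export] Hint Resolve recursive2_pow : recursive.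

Fixpoint bsum (f : nat -> nat -> nat) (n y : nat) : nat :=
  match n with 0 => 0 | S n' => bsum f n' y + f n' y end.

Lemma recursive2_bsum f : recursive2 f -> recursive2 (bsum f).
Proof.
  intro Hf.
  apply (recursive2_of_prim_rec (fun _ => 0) (fun v => nth 1 v 0 + f (nth 0 v 0) (nth 2 v 0)));
    [solve_recursive .. |].
  induction n; intros; simpl; auto.
Qed.

Lemma bsum_count f K y n :
  (forall j, j < n -> f j y = if j <? K then 1 else 0) -> bsum f n y = Nat.min n K.
Proof.
  induction n; intros H; cbn [bsum]; auto.
  rewrite IHn by (intros; apply H; lia). rewrite H by lia.
  destruct (Nat.ltb_spec n K); lia.
Qed.

Lemma bsum_seq f n y : bsum f n y = list_sum (map (fun k => f k y) (seq 0 n)).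
Proof.
  induction n; auto. rewrite seq_S, map_app, list_sum_app. cbn [bsum]. rewrite IHn.
  simpl. lia.
Qed.

Fixpoint iter_from (g : nat -> nat) (n y : nat) : nat :=
  match n with 0 => y | S n' => g (iter_from g n' y) end.

Lemma recursive2_iter_from g : recursive1 g -> recursive2 (iter_from g).
Proof.
  intro Hg.
  apply (recursive2_of_prim_rec (fun v => nth 0 v 0) (fun v => g (nth 1 v 0)));
    [solve_recursive .. |].
  induction n; intros; simpl; auto.
Qed.

Lemma iter_from_S g k y : iter_from g (S k) y = iter_from g k (g y).
Proof. induction k; simpl; auto. Qed.

#[export] Hint Extern 1 (recursive2 (bsum _)) =>
  apply recursive2_bsum; unfold recursive2; cbv beta; solve_recursive : recursive.
#[export] Hint Extern 1 (recursive2 (iter_from _)) =>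
  apply recursive2_iter_from; unfold recursive1; cbv beta; solve_recursive : recursive.

Definition sg (x : nat) : nat := 1 - (1 - x).
Definition chi_lt (x y : nat) : nat := sg (y - x).
Definition chi_eq (x y : nat) : nat := 1 - sg ((x - y) + (y - x)).
Definition cond (b x y : nat) : nat := b * x + (1 - b) * y.

Lemma recursive1_sg : recursive1 sg.
Proof. unfold recursive1, sg; solve_recursive. Qed.
#[export] Hint Resolve recursive1_sg : recursive.
Lemma recursive2_chi_lt : recursive2 chi_lt.
Proof. unfold recursive2, chi_lt; solve_recursive. Qed.
Lemma recursive2_chi_eq : recursive2 chi_eq.
Proof. unfold recursive2, chi_eq; solve_recursive. Qed.
Lemma recursive3_cond : recursive3 cond.
Proof. unfold recursive3, cond; solve_recursive. Qed.
#[export] Hint Resolve recursive2_chi_lt recursive2_chi_eq recursive3_cond : recursive.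

Lemma sg_spec x : sg x = if x =? 0 then 0 else 1.
Proof. unfold sg; destruct x; simpl; lia. Qed.

Lemma chi_lt_spec x y : chi_lt x y = if x <? y then 1 else 0.
Proof.
  unfold chi_lt; rewrite sg_spec.
  destruct (Nat.ltb_spec x y); destruct (Nat.eqb_spec (y - x) 0); lia.
Qed.

Lemma chi_eq_spec x y : chi_eq x y = if x =? y then 1 else 0.
Proof.
  unfold chi_eq; rewrite sg_spec.
  destruct (Nat.eqb_spec x y); destruct (Nat.eqb_spec (x - y + (y - x)) 0); lia.
Qed.

Lemma cond_b2n b x y : cond (b2n b) x y = if b then x else y.
Proof. unfold cond; destruct b; simpl; lia. Qed.

Lemma div2_bounds x : 2 * (x / 2) <= x < 2 * (x / 2) + 2.
Proof. pose proof (Nat.div_mod x 2); pose proof (Nat.mod_upper_bound x 2); lia. Qed.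

Lemma div2_unique x q : 2 * q <= x < 2 * q + 2 -> x / 2 = q.
Proof. pose proof (div2_bounds x); lia. Qed.

Lemma recursive1_div2 : recursive1 (fun x => x / 2).
Proof.
  (* [x / 2] is the number of [j < x] with [2 j + 1 < x]. *)
  assert (H : recursive1 (fun x => bsum (fun j x => chi_lt (2 * j + 1) x) x x))
    by (unfold recursive1; solve_recursive).
  eapply recursive_ext; [exact H|]; intros v; cbv beta.
  set (x := nth 0 v 0); pose proof (div2_bounds x).
  rewrite (bsum_count _ (x / 2)); [lia|].
  intros j _; rewrite chi_lt_spec.
  destruct (Nat.ltb_spec (2 * j + 1) x); destruct (Nat.ltb_spec j (x / 2)); lia.
Qed.
#[export] Hint Resolve recursive1_div2 : recursive.

Lemma recursive2_npair : recursive2 npair.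
Proof. unfold recursive2, npair; solve_recursive. Qed.
#[export] Hint Resolve recursive2_npair : recursive.

Definition triangle (k : nat) : nat := k * (k + 1) / 2.

Lemma triangle_S k : triangle (S k) = triangle k + S k.
Proof.
  unfold triangle; replace (S k * (S k + 1)) with (k * (k + 1) + S k * 2) by lia.
  rewrite Nat.div_add by lia; reflexivity.
Qed.

Lemma triangle_mono j k : j <= k -> triangle j <= triangle k.
Proof. induction 1; auto; rewrite triangle_S; lia. Qed.

Lemma triangle_ge k : k <= triangle k.
Proof. induction k; auto; rewrite triangle_S; lia. Qed.

Lemma npair_triangle a b : npair a b = triangle (a + b) + b.
Proof. reflexivity. Qed.

(* The diagonal [a + b] of [npair a b] is the number of [j] with [triangle (j + 1) <= npair a b]. *)
Definition unpair_diag (m : nat) : nat := bsum (fun j m => 1 - chi_lt m (triangle (j + 1))) m m.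
Definition unpair1 (m : nat) : nat := unpair_diag m - (m - triangle (unpair_diag m)).
Definition unpair2 (m : nat) : nat := m - triangle (unpair_diag m).

Lemma recursive1_triangle : recursive1 triangle.
Proof. unfold recursive1, triangle; solve_recursive. Qed.
#[export] Hint Resolve recursive1_triangle : recursive.

Lemma recursive1_unpair1 : recursive1 unpair1.
Proof. unfold recursive1, unpair1, unpair_diag; solve_recursive. Qed.
Lemma recursive1_unpair2 : recursive1 unpair2.
Proof. unfold recursive1, unpair2, unpair_diag; solve_recursive. Qed.
#[export] Hint Resolve recursive1_unpair1 recursive1_unpair2 : recursive.

Lemma unpair_diag_npair a b : unpair_diag (npair a b) = a + b.
Proof.
  unfold unpair_diag; rewrite (bsum_count _ (a + b)).
  - rewrite npair_triangle; pose proof (triangle_ge (a + b)); lia.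
  - intros j _; rewrite chi_lt_spec, npair_triangle.
    destruct (Nat.ltb_spec j (a + b)).
    + assert (triangle (j + 1) <= triangle (a + b)) by (apply triangle_mono; lia).
      destruct (Nat.ltb_spec (triangle (a + b) + b) (triangle (j + 1))); lia.
    + assert (triangle (S (a + b)) <= triangle (j + 1)) by (apply triangle_mono; lia).
      rewrite triangle_S in *.
      destruct (Nat.ltb_spec (triangle (a + b) + b) (triangle (j + 1))); lia.
Qed.

Lemma unpair1_npair a b : unpair1 (npair a b) = a.
Proof. unfold unpair1; rewrite unpair_diag_npair, npair_triangle; lia. Qed.
Lemma unpair2_npair a b : unpair2 (npair a b) = b.
Proof. unfold unpair2; rewrite unpair_diag_npair, npair_triangle; lia. Qed.

(** * Codes of situations *)

Definition code_tail (m : nat) : nat := (m - 1) / 2.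
Definition code_skipn (k m : nat) : nat := iter_from code_tail k m.
Definition code_length (m : nat) : nat := bsum (fun k m => sg (code_skipn k m)) m m.
Definition mod2 (x : nat) : nat := x - 2 * (x / 2).
(* The code of a nonempty situation is even exactly when its head is [true]. *)
Definition code_nth (k m : nat) : nat := 1 - mod2 (code_skipn k m).
Definition code_firstn (m k : nat) : nat := m - 2 ^ k * code_skipn k m.

Lemma recursive1_code_tail : recursive1 code_tail.
Proof. unfold recursive1, code_tail; solve_recursive. Qed.
#[export] Hint Resolve recursive1_code_tail : recursive.
Lemma recursive2_code_skipn : recursive2 code_skipn.
Proof. unfold recursive2, code_skipn; solve_recursive. Qed.
#[export] Hint Resolve recursive2_code_skipn : recursive.
Lemma recursive1_code_length : recursive1 code_length.
Proof. unfold recursive1, code_length; solve_recursive. Qed.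
Lemma recursive2_code_nth : recursive2 code_nth.
Proof. unfold recursive2, code_nth, mod2; solve_recursive. Qed.
Lemma recursive2_code_firstn : recursive2 code_firstn.
Proof. unfold recursive2, code_firstn; solve_recursive. Qed.
#[export] Hint Resolve recursive1_code_length recursive2_code_nth recursive2_code_firstn
  : recursive.

Lemma code_sit_inj s t : code_sit s = code_sit t -> s = t.
Proof.
  revert t; induction s as [|x s IH]; intros [|y t]; simpl; intros H; auto.
  - destruct y; lia.
  - destruct x; lia.
  - destruct x, y; try lia; f_equal; apply IH; lia.
Qed.

Lemma code_sit_length s : length s <= code_sit s.
Proof. induction s as [|x s IH]; simpl; auto. destruct x; lia. Qed.

Lemma code_tail_cons x s : code_tail (code_sit (x :: s)) = code_sit s.
Proof. unfold code_tail; cbn [code_sit]. apply div2_unique; destruct x; lia. Qed.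

Lemma code_skipn_spec k s : code_skipn k (code_sit s) = code_sit (skipn k s).
Proof.
  unfold code_skipn; revert s; induction k; intros s; auto.
  rewrite iter_from_S. destruct s as [|x s].
  - change (code_tail (code_sit [])) with (code_sit []); rewrite IHk; destruct k; reflexivity.
  - rewrite code_tail_cons, IHk; reflexivity.
Qed.

Lemma code_length_spec s : code_length (code_sit s) = length s.
Proof.
  unfold code_length; rewrite (bsum_count _ (length s)).
  - pose proof (code_sit_length s); lia.
  - intros j _; rewrite sg_spec, code_skipn_spec.
    destruct (Nat.ltb_spec j (length s)).
    + destruct (Nat.eqb_spec (code_sit (skipn j s)) 0) as [E|]; [|reflexivity].
      destruct (skipn j s) as [|[|] t] eqn:E'; simpl in E; try lia.
      apply (f_equal (@length bool)) in E'; rewrite length_skipn in E'; simpl in E'; lia.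
    + rewrite skipn_all2 by lia; reflexivity.
Qed.

Lemma code_nth_spec k s : k < length s -> code_nth k (code_sit s) = b2n (nth k s false).
Proof.
  intros Hk; unfold code_nth, mod2; rewrite code_skipn_spec.
  replace (nth k s false) with (nth 0 (skipn k s) false)
    by (clear Hk; revert s; induction k; intros [|x s]; simpl; auto).
  destruct (skipn k s) as [|x t] eqn:E.
  - apply (f_equal (@length bool)) in E; rewrite length_skipn in E; simpl in E; lia.
  - cbn [code_sit nth]; destruct x; simpl b2n.
    + rewrite (div2_unique _ (code_sit t + 1)) by lia; lia.
    + rewrite (div2_unique _ (code_sit t)) by lia; lia.
Qed.

Lemma code_sit_split k s : code_sit s = code_sit (firstn k s) + 2 ^ k * code_sit (skipn k s).
Proof.
  revert s; induction k; intros s; simpl; [lia|].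
  destruct s as [|x s]; simpl; [lia|]. rewrite (IHk s); destruct x; lia.
Qed.

Lemma code_firstn_spec k s : code_firstn (code_sit s) k = code_sit (firstn k s).
Proof. unfold code_firstn; rewrite code_skipn_spec, (code_sit_split k s) at 1; lia. Qed.

Open Scope R_scope.

(** * Real sequences and nonnegative rationals *)

Lemma LimSup_seq_correct (u : nat -> R) : is_LimSup_seq u (LimSup_seq u).
Proof. unfold LimSup_seq; destruct (ex_LimSup_seq u); assumption. Qed.

Lemma LimSup_gt_frequently (u : nat -> R) (c : R) : Rbar_lt c (LimSup_seq u) ->
  forall N, exists n, (N <= n)%nat /\ c < u n.
Proof.
  intros H N; pose proof (LimSup_seq_correct u) as L.
  destruct (LimSup_seq u) as [l| |]; simpl in H; [|apply L|contradiction].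
  destruct (L (mkposreal (l - c) ltac:(lra))) as [L1 _]; destruct (L1 N) as [n [Hn Hu]].
  exists n; simpl in Hu; split; [assumption | lra].
Qed.

Lemma LimSup_lt_eventually (u : nat -> R) (c : R) : Rbar_lt (LimSup_seq u) c ->
  exists N, forall n, (N <= n)%nat -> u n < c.
Proof.
  intros H; pose proof (LimSup_seq_correct u) as L.
  destruct (LimSup_seq u) as [l| |]; simpl in H; [|contradiction|apply L].
  destruct (L (mkposreal (c - l) ltac:(lra))) as [_ [N HN]].
  exists N; intros n Hn; specialize (HN n Hn); simpl in HN; lra.
Qed.

Lemma LimInf_lt_frequently (u : nat -> R) (c : R) : Rbar_lt (LimInf_seq u) c ->
  forall N, exists n, (N <= n)%nat /\ u n < c.
Proof.
  intros H N; destruct (LimSup_gt_frequently (fun n => - u n) (- c)) with N as [n [Hn Hu]].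
  - rewrite LimSup_seq_opp; destruct (LimInf_seq u); simpl in *; trivial; lra.
  - exists n; split; [assumption | lra].
Qed.

Lemma LimInf_gt_eventually (u : nat -> R) (c : R) : Rbar_lt c (LimInf_seq u) ->
  exists N, forall n, (N <= n)%nat -> c < u n.
Proof.
  intros H; destruct (LimSup_lt_eventually (fun n => - u n) (- c)) as [N HN].
  - rewrite LimSup_seq_opp; destruct (LimInf_seq u); simpl in *; trivial; lra.
  - exists N; intros n Hn; specialize (HN n Hn); lra.
Qed.

Lemma LimSup_p_infty_frequently (u : nat -> R) : LimSup_seq u = p_infty ->
  forall M N, exists n, (N <= n)%nat /\ M < u n.
Proof. intros H; pose proof (LimSup_seq_correct u) as L; rewrite H in L; exact L. Qed.

Lemma LimSup_p_infty_intro (u : nat -> R) : (forall M N, exists n, (N <= n)%nat /\ M < u n) ->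
  LimSup_seq u = p_infty.
Proof. intros H; apply is_LimSup_seq_unique; exact H. Qed.

Lemma LimSup_le_const (u : nat -> R) (c : R) : (forall n, u n <= c) -> Rbar_le (LimSup_seq u) c.
Proof. intros H; rewrite <- (LimSup_seq_const c); apply LimSup_le; exists 0%nat; auto. Qed.

Lemma LimInf_ge_const (u : nat -> R) (c : R) : (forall n, c <= u n) -> Rbar_le c (LimInf_seq u).
Proof. intros H; rewrite <- (LimInf_seq_const c); apply LimInf_le; exists 0%nat; auto. Qed.

Lemma LimInf_ge0_of_eventually (u : nat -> R) :
  (forall d, 0 < d -> exists N, forall n, (N <= n)%nat -> - d < u n) -> Rbar_le 0 (LimInf_seq u).
Proof.
  intros H; apply Rbar_not_lt_le; intros Hlt.
  assert (Hd : exists d, 0 < d /\ Rbar_lt (LimInf_seq u) (- d)) by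
    (destruct (LimInf_seq u) as [l| |]; simpl in Hlt; try contradiction;
     [exists (- l / 2); simpl; split; lra | exists 1; split; [lra | exact I]]).
  destruct Hd as [d [Hd Hl]]; destruct (H d Hd) as [N HN].
  destruct (LimInf_lt_frequently u (- d) Hl N) as [n [Hn Hu]]; specialize (HN n Hn); lra.
Qed.

Lemma LimSup_le0_of_eventually (u : nat -> R) :
  (forall d, 0 < d -> exists N, forall n, (N <= n)%nat -> u n < d) -> Rbar_le (LimSup_seq u) 0.
Proof.
  intros H; apply Rbar_not_lt_le; intros Hlt.
  assert (Hd : exists d, 0 < d /\ Rbar_lt d (LimSup_seq u)) by
    (destruct (LimSup_seq u) as [l| |]; simpl in Hlt; try contradiction;
     [exists (l / 2); simpl; split; lra | exists 1; split; [lra | exact I]]).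
  destruct Hd as [d [Hd Hl]]; destruct (H d Hd) as [N HN].
  destruct (LimSup_gt_frequently u d Hl N) as [n [Hn Hu]]; specialize (HN n Hn); lra.
Qed.

Lemma LimSup_mult_p_infty (u v : nat -> R) : (forall n, 0 <= u n) -> (forall n, 0 <= v n) ->
  (forall M N, exists n, (N <= n)%nat /\ M < u n * v n) ->
  LimSup_seq u = p_infty \/ LimSup_seq v = p_infty.
Proof.
  intros Hu Hv H.
  assert (Bnd : forall w : nat -> R, LimSup_seq w <> p_infty ->
            exists M N, 0 <= M /\ forall n, (N <= n)%nat -> w n < M).
  { intros w Hw.
    assert (Hc : exists c : R, Rbar_lt (LimSup_seq w) c)
      by (destruct (LimSup_seq w) as [l| |];
          [exists (l + 1); simpl; lra | congruence | exists 0; exact I]).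
    destruct Hc as [c Hc]; destruct (LimSup_lt_eventually w c Hc) as [N HN].
    exists (Rmax 0 c), N; split; [apply Rmax_l|].
    intros n Hn; specialize (HN n Hn); pose proof (Rmax_r 0 c); lra. }
  apply NNPP; intros C; apply not_or_and in C; destruct C as [C1 C2].
  destruct (Bnd u C1) as [M1 [N1 [HM1 H1]]], (Bnd v C2) as [M2 [N2 [HM2 H2]]].
  destruct (H (M1 * M2) (N1 + N2)%nat) as [n [Hn Hlt]].
  specialize (H1 n ltac:(lia)); specialize (H2 n ltac:(lia)); specialize (Hu n); specialize (Hv n).
  assert (u n * v n <= M1 * M2) by (apply Rmult_le_compat; lra); lra.
Qed.

Lemma Rbar_lt_interpolate_above (x : R) (L : Rbar) : Rbar_lt x L ->
  exists a c : R, x < a < c /\ Rbar_lt c L.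
Proof.
  destruct L as [l| |]; simpl; intros H; [|exists (x + 1), (x + 2); simpl; split; [lra | exact I] |
                                            contradiction].
  exists (x + (l - x) / 3), (x + 2 * (l - x) / 3); simpl; split; lra.
Qed.

Lemma Rbar_lt_interpolate_below (L : Rbar) (x : R) : Rbar_lt L x ->
  exists c a : R, Rbar_lt L c /\ c < a < x.
Proof.
  destruct L as [l| |]; simpl; intros H; [|contradiction|exists (x - 2), (x - 1); simpl; split;
                                                         [exact I | lra]].
  exists (l + (x - l) / 3), (l + 2 * (x - l) / 3); simpl; split; lra.
Qed.

Lemma pow_unbounded k : 1 < k -> forall M, exists K, M < k ^ K.
Proof.
  intros Hk M; pose proof (proj2 (is_lim_seq_spec _ _) (is_lim_seq_geom_p k Hk) M) as [N HN].
  exists N; apply HN; lia.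
Qed.

Lemma inv_pow2_small eps : 0 < eps -> exists N, / 2 ^ N < eps.
Proof.
  intros He; destruct (pow_unbounded 2 ltac:(lra) (/ eps)) as [K HK]; exists K.
  rewrite <- (Rinv_inv eps); apply Rinv_lt_contravar; [|exact HK].
  apply Rmult_lt_0_compat; [apply Rinv_0_lt_compat, He | apply pow_lt; lra].
Qed.

Lemma Un_cv_const c : Un_cv (fun _ => c) c.
Proof.
  intros e He; exists 0%nat; intros; unfold R_dist; rewrite Rminus_diag, Rabs_R0; exact He.
Qed.

Lemma exists_inv_nat_scale t : exists m, (1 <= m)%nat /\ 0 < / INR m /\ / INR m * t <= 1.
Proof.
  destruct (INR_unbounded (Rmax 1 t)) as [m Hm]; pose proof (Rmax_l 1 t); pose proof (Rmax_r 1 t).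
  assert (Hm1 : (1 <= m)%nat) by (apply INR_le; simpl; lra).
  exists m; split; [exact Hm1|]; assert (0 < / INR m) by (apply Rinv_0_lt_compat; lra).
  split; [assumption|]; apply (Rmult_le_reg_l (INR m)); [lra|].
  rewrite <- Rmult_assoc, Rinv_r, Rmult_1_l, Rmult_1_r by lra; lra.
Qed.

Definition nnrat (r : R) : Prop := exists a b : nat, (1 <= b)%nat /\ r = INR a / INR b.

Lemma nnrat_nonneg r : nnrat r -> 0 <= r.
Proof.
  intros [a [b [Hb ->]]]; apply Rdiv_le_0_compat; [apply pos_INR | apply lt_0_INR; lia].
Qed.

Lemma nnrat_add x y : nnrat x -> nnrat y -> nnrat (x + y).
Proof.
  intros [a [b [Hb ->]]] [c [d [Hd ->]]]; exists (a * d + c * b)%nat, (b * d)%nat.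
  split; [nia|]; assert (0 < INR b) by (apply lt_0_INR; lia).
  assert (0 < INR d) by (apply lt_0_INR; lia).
  rewrite plus_INR, !mult_INR; field; lra.
Qed.

Lemma nnrat_div x y : nnrat x -> nnrat y -> 0 < y -> nnrat (x / y).
Proof.
  intros [a [b [Hb ->]]] [c [d [Hd ->]]] Hy.
  assert (0 < INR b) by (apply lt_0_INR; lia); assert (0 < INR d) by (apply lt_0_INR; lia).
  assert (0 < INR c) by (apply (Rmult_lt_reg_r (/ INR d)); [apply Rinv_0_lt_compat|]; lra).
  assert (c <> 0%nat) by (intros ->; simpl in *; lra).
  exists (a * d)%nat, (b * c)%nat; split; [nia|].
  rewrite !mult_INR; field; lra.
Qed.

Lemma nnrat_two : nnrat 2.
Proof. exists 2%nat, 1%nat; split; [lia | simpl; lra]. Qed.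

Lemma nnrat_one_minus x : nnrat x -> x <= 1 -> nnrat (1 - x).
Proof.
  intros [a [b [Hb ->]]] Hx; assert (0 < INR b) by (apply lt_0_INR; lia).
  assert (a <= b)%nat by (apply INR_le; apply (Rmult_le_compat_r (INR b)) in Hx; [|lra];
                          field_simplify in Hx; lra).
  exists (b - a)%nat, b; split; [assumption|]; rewrite minus_INR by assumption; field; lra.
Qed.

Lemma exists_nnrat_between x y : 0 <= x < y -> exists r, nnrat r /\ x < r < y.
Proof.
  intros [Hx Hxy]; destruct (archimed_cor1 (y - x)) as [N [HN HN0]]; [lra|].
  assert (HNpos : 0 < INR N) by (apply lt_0_INR; lia).
  destruct (archimed (x * INR N)) as [H1 H2].
  assert (Hup : (0 <= up (x * INR N))%Z)
    by (apply le_IZR; assert (0 <= x * INR N) by (apply Rmult_le_pos; lra); simpl; lra).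
  exists (INR (Z.to_nat (up (x * INR N))) / INR N); split.
  { exists (Z.to_nat (up (x * INR N))), N; split; [lia | reflexivity]. }
  rewrite INR_IZR_INZ, Z2Nat.id by assumption.
  assert (1 < (y - x) * INR N)
    by (apply (Rmult_lt_compat_r (INR N)) in HN; [rewrite Rinv_l in HN by lra; lra | lra]).
  split; apply (Rmult_lt_reg_r (INR N)); try assumption; field_simplify; lra.
Qed.

(** * Rational-valued processes and selection bets *)

Definition exact_rational {D : Type} (code : D -> nat) (r : D -> R) : Prop :=
  recursive_Q code (fun d _ => r d).

Lemma exact_rational_lsc {D : Type} (code : D -> nat) r :
  exact_rational code r -> lower_semicomputable code r.
Proof.
  intros Hr; exists (fun d _ => r d); split; [exact Hr|].
  split; [intros; lra | intros; apply Un_cv_const].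
Qed.

Lemma exact_rational_computable {D : Type} (code : D -> nat) r :
  exact_rational code r -> computable_map code r.
Proof.
  intros Hr; exists (fun d _ => r d); split; [exact Hr|].
  intros; rewrite Rminus_diag, Rabs_R0; apply Rinv_0_lt_compat, pow_lt; lra.
Qed.

Lemma zz_double X : zz (2 * X)%nat = Z.of_nat X.
Proof.
  unfold zz; rewrite Nat.even_mul; cbn [Nat.even orb].
  rewrite Nat.mul_comm, Nat.div_mul by lia; reflexivity.
Qed.

Lemma exact_rational_of_ratio {D : Type} (code : D -> nat) r (N M : nat -> nat) :
  recursive1 N -> recursive1 M -> (forall d, 1 <= M (code d))%nat ->
  (forall d, r d = INR (N (code d)) / INR (M (code d))) -> exact_rational code r.
Proof.
  intros HN HM Hpos Hr.
  exists (fun P => 2 * N (unpair1 P))%nat, (fun P => M (unpair1 P) - 1)%nat.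
  split; [|split]; [apply recursive1_iff; unfold recursive1; solve_recursive ..|].
  intros d n; rewrite unpair1_npair, Hr; unfold qval; rewrite zz_double, <- INR_IZR_INZ.
  specialize (Hpos d); replace (S (M (code d) - 1)) with (M (code d)) by lia; reflexivity.
Qed.

Definition recursive_guard {Dt : Type} (code : Dt -> nat) (g : Dt -> bool) : Prop :=
  exists h, recursive_nat h /\ forall d, h (code d) = b2n (g d).

Lemma recursive_guard_andb {Dt : Type} (code : Dt -> nat) g1 g2 :
  recursive_guard code g1 -> recursive_guard code g2 ->
  recursive_guard code (fun d => g1 d && g2 d).
Proof.
  intros [h1 [Hh1 E1]] [h2 [Hh2 E2]]; rewrite <- recursive1_iff in Hh1, Hh2.
  exists (fun m => h1 m * h2 m)%nat; split.
  { apply recursive1_iff; unfold recursive1; solve_recursive. }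
  intros d; rewrite E1, E2; destruct (g1 d), (g2 d); reflexivity.
Qed.

Lemma recursive_guard_fst (g : list bool -> bool) :
  recursive_guard code_sit g -> recursive_guard code_sx (fun p => g (fst p)).
Proof.
  intros [h [Hh E]]; rewrite <- recursive1_iff in Hh.
  exists (fun m => h (unpair1 m)); split.
  { apply recursive1_iff; unfold recursive1; solve_recursive. }
  intros [s x]; unfold code_sx; rewrite unpair1_npair; apply E.
Qed.

Lemma recursive_Q_if {Dt : Type} (code : Dt -> nat) (g : Dt -> bool) q1 q2 :
  recursive_guard code g -> recursive_Q code q1 -> recursive_Q code q2 ->
  recursive_Q code (fun d k => if g d then q1 d k else q2 d k).
Proof.
  intros [h [Hh Hg]] [n1 [d1 [Hn1 [Hd1 Hq1]]]] [n2 [d2 [Hn2 [Hd2 Hq2]]]].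
  rewrite <- recursive1_iff in *.
  exists (fun P => cond (h (unpair1 P)) (n1 P) (n2 P)),
         (fun P => cond (h (unpair1 P)) (d1 P) (d2 P)).
  split; [|split]; [apply recursive1_iff; unfold recursive1; solve_recursive ..|].
  intros d k; rewrite unpair1_npair, Hg, !cond_b2n; destruct (g d); auto.
Qed.

Lemma recursive_Q_const {Dt : Type} (code : Dt -> nat) (c : nat) :
  recursive_Q code (fun _ _ => INR c).
Proof.
  exists (fun _ => 2 * c)%nat, (fun _ => 0%nat); split; [|split];
    [apply recursive1_iff; unfold recursive1; solve_recursive ..|].
  intros; unfold qval; rewrite zz_double, <- INR_IZR_INZ; simpl; field.
Qed.

Lemma recursive_Q_scale {Dt : Type} (code : Dt -> nat) q (m : nat) : (1 <= m)%nat ->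
  recursive_Q code q -> recursive_Q code (fun d k => / INR m * q d k).
Proof.
  intros Hm [hn [hd [Hn [Hd Hq]]]]; rewrite <- recursive1_iff in Hn, Hd.
  exists hn, (fun P => m * S (hd P) - 1)%nat; split; [|split];
    [apply recursive1_iff; unfold recursive1; solve_recursive ..|].
  intros d k; rewrite Hq; unfold qval.
  replace (S (m * S (hd (npair (code d) k)) - 1)) with (m * S (hd (npair (code d) k)))%nat by nia.
  assert (0 < INR m) by (apply lt_0_INR; lia).
  assert (0 < INR (S (hd (npair (code d) k)))) by apply lt_0_INR, Nat.lt_0_succ.
  rewrite mult_INR; field; lra.
Qed.

Lemma fold_right_mult_acc (g : nat -> R) a l :
  fold_right (fun k acc => g k * acc) a l = fold_right (fun k acc => g k * acc) 1 l * a.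
Proof. induction l; simpl; [lra | rewrite IHl; lra]. Qed.

Lemma firstn_snoc_le {A} k (s : list A) x : (k <= length s)%nat -> firstn k (s ++ [x]) = firstn k s.
Proof.
  intros Hk; rewrite firstn_app, (proj2 (Nat.sub_0_le k (length s)) Hk), firstn_O, app_nil_r.
  reflexivity.
Qed.

Lemma prefix_S om n : prefix om (S n) = prefix om n ++ [om n].
Proof. unfold prefix; rewrite seq_S, map_app; reflexivity. Qed.

Lemma length_prefix om n : length (prefix om n) = n.
Proof. unfold prefix; rewrite length_map, length_seq; reflexivity. Qed.

Lemma firstn_prefix om k n : (k <= n)%nat -> firstn k (prefix om n) = prefix om k.
Proof.
  intros H; unfold prefix; rewrite firstn_map; f_equal.
  replace n with (k + (n - k))%nat by lia; rewrite seq_app, firstn_app, length_seq, Nat.sub_diag.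
  rewrite firstn_O, app_nil_r, firstn_all2 by (rewrite length_seq; lia); reflexivity.
Qed.

Lemma Dcirc_snoc D s x : Dcirc D (s ++ [x]) = Dcirc D s * D s x.
Proof.
  unfold Dcirc; rewrite length_app, Nat.add_1_r, seq_S, fold_right_app; cbn [fold_right].
  rewrite fold_right_mult_acc, Nat.add_0_l, firstn_snoc_le, firstn_all, app_nth2, Nat.sub_diag
    by lia.
  rewrite Rmult_1_r; f_equal.
  assert (Hl : forall k, In k (seq 0 (length s)) -> (k < length s)%nat)
    by (intros k Hk; apply in_seq in Hk; lia).
  induction (seq 0 (length s)) as [|k l IH]; simpl; [reflexivity|].
  rewrite IH by (intros; apply Hl; simpl; auto).
  specialize (Hl k (or_introl eq_refl)).
  rewrite firstn_snoc_le, app_nth1 by lia; reflexivity.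
Qed.

Definition selection_bet (S : list bool -> bool) (a1 a0 : R) : list bool -> bool -> R :=
  fun s x => if S s then (if x then a1 else a0) else 1.

Definition count_selected (S : list bool -> bool) (x : bool) (s : list bool) : nat :=
  list_sum (map (fun k => b2n (S (firstn k s) && Bool.eqb (nth k s false) x))
                (seq 0 (length s))).

Lemma Dcirc_selection_bet S a1 a0 s :
  Dcirc (selection_bet S a1 a0) s = a1 ^ count_selected S true s * a0 ^ count_selected S false s.
Proof.
  unfold Dcirc, count_selected; induction (seq 0 (length s)) as [|k l IH]; simpl; [lra|].
  rewrite IH, !pow_add; unfold selection_bet.
  destruct (S (firstn k s)), (nth k s false); simpl; ring.
Qed.

Lemma count_selected_snoc S x s y :
  count_selected S x (s ++ [y]) = (count_selected S x s + b2n (S s && Bool.eqb y x))%nat.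
Proof.
  unfold count_selected; rewrite length_app, Nat.add_1_r, seq_S, map_app, list_sum_app.
  cbn [map list_sum]; rewrite Nat.add_0_l, firstn_snoc_le, firstn_all, app_nth2, Nat.sub_diag
    by lia; cbn [nth]; f_equal; [f_equal | simpl; lia].
  apply map_ext_in; intros k Hk; apply in_seq in Hk.
  rewrite firstn_snoc_le, app_nth1 by lia; reflexivity.
Qed.

Definition code_count_selected (hS : nat -> nat) (b m : nat) : nat :=
  bsum (fun k m => hS (code_firstn m k) * chi_eq (code_nth k m) b)%nat (code_length m) m.

Lemma code_count_selected_spec hS S x s : (forall s, hS (code_sit s) = b2n (S s)) ->
  code_count_selected hS (b2n x) (code_sit s) = count_selected S x s.
Proof.
  intros HS; unfold code_count_selected, count_selected.
  rewrite bsum_seq, code_length_spec; f_equal; apply map_ext_in; intros k Hk.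
  apply in_seq in Hk; rewrite code_firstn_spec, HS, code_nth_spec, chi_eq_spec by lia.
  destruct (S (firstn k s)), (nth k s false), x; reflexivity.
Qed.

Lemma recursive1_code_count_selected hS b : recursive1 hS -> recursive1 (code_count_selected hS b).
Proof. intros HS; unfold recursive1, code_count_selected; solve_recursive. Qed.

Lemma exact_rational_selection_bet S a1 a0 : recursive_selection S -> nnrat a1 -> nnrat a0 ->
  exact_rational code_sit (Dcirc (selection_bet S a1 a0)).
Proof.
  intros [hS [HhS HS]] [n1 [d1 [Hd1 ->]]] [n0 [d0 [Hd0 ->]]]; apply recursive1_iff in HhS.
  pose proof (recursive1_code_count_selected hS 1 HhS) as Hc1.
  pose proof (recursive1_code_count_selected hS 0 HhS) as Hc0.
  set (c1 := code_count_selected hS 1) in *; set (c0 := code_count_selected hS 0) in *.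
  apply (exact_rational_of_ratio _ _ (fun m => n1 ^ c1 m * n0 ^ c0 m)%nat
                                     (fun m => d1 ^ c1 m * d0 ^ c0 m)%nat).
  - unfold recursive1; solve_recursive.
  - unfold recursive1; solve_recursive.
  - intros s; pose proof (Nat.pow_le_mono_l 1 d1 (c1 (code_sit s)) Hd1).
    pose proof (Nat.pow_le_mono_l 1 d0 (c0 (code_sit s)) Hd0).
    rewrite !Nat.pow_1_l in *; nia.
  - intros s; rewrite Dcirc_selection_bet.
    change 1%nat with (b2n true) in c1; change 0%nat with (b2n false) in c0; unfold c1, c0.
    rewrite !(code_count_selected_spec hS S) by exact HS.
    assert (INR d1 <> 0) by (apply not_0_INR; lia); assert (INR d0 <> 0) by (apply not_0_INR; lia).
    rewrite !mult_INR, !pow_INR; unfold Rdiv; rewrite !Rpow_mult_distr, !pow_inv, Rinv_mult; ring.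
Qed.

Lemma lsc_multiplier_selection_bet S a1 a0 : recursive_selection S -> nnrat a1 -> nnrat a0 ->
  lsc_multiplier (selection_bet S a1 a0).
Proof.
  intros [hS [HhS HS]] [n1 [d1 [Hd1 ->]]] [n0 [d0 [Hd0 ->]]]; apply recursive1_iff in HhS.
  apply exact_rational_lsc.
  apply (exact_rational_of_ratio _ _ (fun p => cond (hS (unpair1 p)) (cond (unpair2 p) n1 n0) 1)
                                     (fun p => cond (hS (unpair1 p)) (cond (unpair2 p) d1 d0) 1));
    [unfold recursive1; solve_recursive .. | |];
    intros [s x]; unfold code_sx; simpl fst; simpl snd;
    rewrite unpair1_npair, unpair2_npair, HS, !cond_b2n; unfold selection_bet;
    destruct (S s), x; simpl; try lia; unfold Rdiv; try rewrite Rinv_1; ring.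
Qed.

Lemma selection_bet_nonneg S a1 a0 s : 0 <= a1 -> 0 <= a0 -> 0 <= Dcirc (selection_bet S a1 a0) s.
Proof.
  intros H1 H0; rewrite Dcirc_selection_bet.
  apply Rmult_le_pos; apply pow_le; assumption.
Qed.

Lemma test_supermartingale_selection_bet L H S a1 a0 : 0 <= a1 -> 0 <= a0 ->
  (forall s, S s = true -> forall p, L s <= p <= H s -> p * a1 + (1 - p) * a0 <= 1) ->
  test_supermartingale L H (Dcirc (selection_bet S a1 a0)).
Proof.
  intros H1 H0 Hfair; split; [|split; [intros; apply selection_bet_nonneg; assumption|]];
    [|reflexivity].
  intros s p Hp; rewrite !Dcirc_snoc.
  pose proof (selection_bet_nonneg S a1 a0 s H1 H0).
  set (T := Dcirc (selection_bet S a1 a0) s) in *.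
  unfold selection_bet; destruct (S s) eqn:E; [|lra].
  specialize (Hfair s E p Hp).
  replace (p * (T * a1 - T) + (1 - p) * (T * a0 - T)) with (T * (p * a1 + (1 - p) * a0 - 1))
    by ring.
  nra.
Qed.

(** * Selections separating a computable forecast from a threshold *)

Lemma mod2_cases x :
  (mod2 x = 0%nat /\ zz x = Z.of_nat (x / 2)) \/
  (mod2 x = 1%nat /\ zz x = (- Z.of_nat ((x + 1) / 2))%Z /\ (1 <= (x + 1) / 2)%nat).
Proof.
  unfold mod2, zz; destruct (Nat.even x) eqn:E.
  - left; apply Nat.even_spec in E; destruct E as [y ->].
    rewrite (div2_unique (2 * y) y) by lia; split; [lia | reflexivity].
  - right; assert (Ho : Nat.odd x = true) by (unfold Nat.odd; rewrite E; reflexivity).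
    apply Nat.odd_spec in Ho; destruct Ho as [y ->].
    rewrite (div2_unique (2 * y + 1) y), (div2_unique (2 * y + 1 + 1) (y + 1)) by lia.
    split; [lia | split; [reflexivity | lia]].
Qed.

Lemma INR_div_lt_iff x y z w : (1 <= y)%nat -> (1 <= w)%nat ->
  INR x / INR y < INR z / INR w <-> (x * w < z * y)%nat.
Proof.
  intros Hy Hw; assert (Hy' : 0 < INR y) by (apply lt_0_INR; lia).
  assert (Hw' : 0 < INR w) by (apply lt_0_INR; lia).
  assert (E1 : INR x / INR y * (INR y * INR w) = INR x * INR w) by (field; lra).
  assert (E2 : INR z / INR w * (INR y * INR w) = INR z * INR y) by (field; lra).
  split; intros Hlt.
  - apply INR_lt; rewrite !mult_INR, <- E1, <- E2; apply Rmult_lt_compat_r; [nra | exact Hlt].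
  - apply lt_INR in Hlt; rewrite !mult_INR, <- E1, <- E2 in Hlt.
    apply Rmult_lt_reg_r in Hlt; [exact Hlt | nra].
Qed.

Lemma qval_of_mod2_0 a b : mod2 a = 0%nat -> qval a b = INR (a / 2) / INR (S b).
Proof.
  intros Ha; unfold qval; destruct (mod2_cases a) as [[_ ->]|[H _]]; [|lia].
  rewrite <- INR_IZR_INZ; reflexivity.
Qed.

Lemma qval_of_mod2_1 a b : mod2 a = 1%nat -> qval a b < 0.
Proof.
  intros Ha; unfold qval; destruct (mod2_cases a) as [[H _]|[_ [-> Hpos]]]; [lia|].
  apply Rdiv_neg_pos; [apply IZR_lt; lia | apply lt_0_INR; lia].
Qed.

Definition code_lt_rat (tn td a b : nat) : nat :=
  cond (mod2 a) 1 (chi_lt (a / 2 * td) (tn * S b)).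
Definition code_gt_rat (tn td a b : nat) : nat :=
  cond (mod2 a) 0 (chi_lt (tn * S b) (a / 2 * td)).

Lemma code_lt_rat_spec tn td a b : (1 <= td)%nat ->
  code_lt_rat tn td a b = if Rlt_dec (qval a b) (INR tn / INR td) then 1%nat else 0%nat.
Proof.
  intros Htd; assert (Ht : 0 <= INR tn / INR td) by (apply nnrat_nonneg; exists tn, td; auto).
  unfold code_lt_rat, cond; destruct (mod2_cases a) as [[Ha _]|[Ha _]]; rewrite Ha.
  - rewrite chi_lt_spec, qval_of_mod2_0 by exact Ha.
    destruct (Rlt_dec _ _) as [H|H]; rewrite INR_div_lt_iff in H by lia;
      destruct (Nat.ltb_spec (a / 2 * td) (tn * S b)); lia.
  - pose proof (qval_of_mod2_1 a b Ha); destruct (Rlt_dec _ _); [reflexivity | lra].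
Qed.

Lemma code_gt_rat_spec tn td a b : (1 <= td)%nat ->
  code_gt_rat tn td a b = if Rlt_dec (INR tn / INR td) (qval a b) then 1%nat else 0%nat.
Proof.
  intros Htd; assert (Ht : 0 <= INR tn / INR td) by (apply nnrat_nonneg; exists tn, td; auto).
  unfold code_gt_rat, cond; destruct (mod2_cases a) as [[Ha _]|[Ha _]]; rewrite Ha.
  - rewrite chi_lt_spec, qval_of_mod2_0 by exact Ha.
    destruct (Rlt_dec _ _) as [H|H]; rewrite INR_div_lt_iff in H by lia;
      destruct (Nat.ltb_spec (tn * S b) (a / 2 * td)); lia.
  - pose proof (qval_of_mod2_1 a b Ha); destruct (Rlt_dec _ _); [lra | reflexivity].
Qed.

(* Select where the [N]-th rational approximation of [f] is below a rational [t] in [(a, c)],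
   with [2^-N] smaller than the distances from [t] to [a] and to [c]. *)
Lemma separating_selection_below f a c : computable_map code_sit f -> 0 <= a < c ->
  exists S, recursive_selection S /\ (forall s, f s <= a -> S s = true) /\
            (forall s, S s = true -> f s < c).
Proof.
  intros [q [[hn [hd [Hn [Hd Hq]]]] Happrox]] Hac.
  destruct (exists_nnrat_between a c Hac) as [t [[tn [td [Htd Ht]]] Hat]].
  destruct (inv_pow2_small (Rmin (t - a) (c - t))) as [N HN]; [apply Rmin_glb_lt; lra|].
  pose proof (Rmin_l (t - a) (c - t)); pose proof (Rmin_r (t - a) (c - t)).
  exists (fun s => if Rlt_dec (q s N) t then true else false); split; [|split].
  - apply recursive1_iff in Hn, Hd.
    exists (fun m => code_lt_rat tn td (hn (npair m N)) (hd (npair m N))); split.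
    + apply recursive1_iff; unfold recursive1, code_lt_rat, cond, chi_lt, mod2; solve_recursive.
    + intros s; rewrite code_lt_rat_spec, <- Hq, <- Ht by exact Htd.
      destruct (Rlt_dec (q s N) t); reflexivity.
  - intros s Hs; specialize (Happrox s N); apply Rabs_def2 in Happrox.
    destruct (Rlt_dec (q s N) t); [reflexivity | lra].
  - intros s Hs; specialize (Happrox s N); apply Rabs_def2 in Happrox.
    destruct (Rlt_dec (q s N) t); [lra | discriminate].
Qed.

Lemma separating_selection_above f a c : computable_map code_sit f -> 0 <= a < c ->
  exists S, recursive_selection S /\ (forall s, c <= f s -> S s = true) /\
            (forall s, S s = true -> a < f s).
Proof.
  intros [q [[hn [hd [Hn [Hd Hq]]]] Happrox]] Hac.
  destruct (exists_nnrat_between a c Hac) as [t [[tn [td [Htd Ht]]] Hat]].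
  destruct (inv_pow2_small (Rmin (t - a) (c - t))) as [N HN]; [apply Rmin_glb_lt; lra|].
  pose proof (Rmin_l (t - a) (c - t)); pose proof (Rmin_r (t - a) (c - t)).
  exists (fun s => if Rlt_dec t (q s N) then true else false); split; [|split].
  - apply recursive1_iff in Hn, Hd.
    exists (fun m => code_gt_rat tn td (hn (npair m N)) (hd (npair m N))); split.
    + apply recursive1_iff; unfold recursive1, code_gt_rat, cond, chi_lt, mod2; solve_recursive.
    + intros s; rewrite code_gt_rat_spec, <- Hq, <- Ht by exact Htd.
      destruct (Rlt_dec t (q s N)); reflexivity.
  - intros s Hs; specialize (Happrox s N); apply Rabs_def2 in Happrox.
    destruct (Rlt_dec t (q s N)); [reflexivity | lra].
  - intros s Hs; specialize (Happrox s N); apply Rabs_def2 in Happrox.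
    destruct (Rlt_dec t (q s N)); [lra | discriminate].
Qed.

(** * Selected averages *)

Lemma fold_right_Rplus_seq_S (g : nat -> R) n :
  fold_right Rplus 0 (map g (seq 0 (S n))) = fold_right Rplus 0 (map g (seq 0 n)) + g n.
Proof.
  rewrite seq_S, map_app, fold_right_app; simpl.
  generalize (g n); induction (map g (seq 0 n)); intros; simpl; [lra | rewrite IHl; lra].
Qed.

Lemma sel_count_S S om n :
  sel_count S om (Datatypes.S n) = sel_count S om n + sel S (prefix om n).
Proof. apply fold_right_Rplus_seq_S. Qed.

Lemma sel_sum_S S f om n : sel_sum S f om (Datatypes.S n) =
  sel_sum S f om n + sel S (prefix om n) * ((if om n then 1 else 0) - f (prefix om n)).
Proof. apply (fold_right_Rplus_seq_S (fun k => sel S (prefix om k) * _)). Qed.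

Lemma sel_count_mono S om n m : (n <= m)%nat -> sel_count S om n <= sel_count S om m.
Proof.
  induction 1; [lra|]; rewrite sel_count_S; unfold sel; destruct (S (prefix om m)); lra.
Qed.

Lemma sel_count_nonneg S om n : 0 <= sel_count S om n.
Proof. apply (sel_count_mono S om 0 n); lia. Qed.

Lemma sel_count_p_infty S om : (forall N, exists n, (N <= n)%nat /\ S (prefix om n) = true) ->
  is_lim_seq (sel_count S om) p_infty.
Proof.
  intros Hfreq.
  assert (Hge : forall K, exists n, INR K <= sel_count S om n).
  { induction K as [|K [n Hn]]; [exists 0%nat; apply sel_count_nonneg|].
    destruct (Hfreq n) as [m [Hm HS]]; exists (Datatypes.S m).
    rewrite S_INR, sel_count_S; unfold sel; rewrite HS.
    pose proof (sel_count_mono S om n m Hm); lra. }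
  apply is_lim_seq_spec; intros M; destruct (INR_unbounded M) as [K HK]; destruct (Hge K) as [n Hn].
  exists n; intros m Hm; pose proof (sel_count_mono S om n m Hm); lra.
Qed.

Lemma sel_count_count_selected S om n :
  sel_count S om n =
  INR (count_selected S true (prefix om n) + count_selected S false (prefix om n)).
Proof.
  induction n; [reflexivity|].
  rewrite sel_count_S, IHn, prefix_S, !count_selected_snoc, !plus_INR.
  unfold sel; destruct (S (prefix om n)), (om n); simpl; lra.
Qed.

Definition sel_avg S f om n : R := sel_sum S f om n / sel_count S om n.

Lemma sel_sum_shift S f g d om n :
  (forall k, (k < n)%nat -> S (prefix om k) = true -> f (prefix om k) + d <= g (prefix om k)) ->
  sel_sum S g om n <= sel_sum S f om n - d * sel_count S om n.
Proof.
  induction n; intros H; [unfold sel_sum, sel_count; simpl; lra|].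
  rewrite !sel_sum_S, sel_count_S; specialize (IHn (fun k Hk => H k ltac:(lia))).
  unfold sel; destruct (S (prefix om n)) eqn:E; [specialize (H n ltac:(lia) E)|]; lra.
Qed.

Lemma sel_sum_eventually_le S f g om K n :
  (forall k, (K <= k)%nat -> S (prefix om k) = true -> g (prefix om k) <= f (prefix om k)) ->
  (forall s, g s - f s <= 1) ->
  sel_sum S f om n - INR K <= sel_sum S g om n.
Proof.
  intros H H1; enough (G : sel_sum S f om n - INR (Nat.min n K) <= sel_sum S g om n)
    by (assert (INR (Nat.min n K) <= INR K) by (apply le_INR; lia); lra).
  induction n; [unfold sel_sum; simpl; lra|].
  rewrite !sel_sum_S; unfold sel; specialize (H1 (prefix om n)).
  destruct (le_lt_dec K n).
  - replace (Nat.min (Datatypes.S n) K) with (Nat.min n K) by lia.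
    destruct (S (prefix om n)) eqn:E; [specialize (H n l E)|]; lra.
  - replace (Nat.min (Datatypes.S n) K) with (Datatypes.S (Nat.min n K)) by lia; rewrite S_INR.
    destruct (S (prefix om n)); lra.
Qed.

Lemma sel_count_eventually_large S om K d : is_lim_seq (sel_count S om) p_infty -> 0 < d ->
  exists N, forall n, (N <= n)%nat -> 0 < sel_count S om n /\ K / sel_count S om n < d.
Proof.
  intros H Hd; apply is_lim_seq_spec in H; destruct (H (Rmax 1 (K / d))) as [N HN].
  exists N; intros n Hn; specialize (HN n Hn); pose proof (Rmax_l 1 (K / d)).
  pose proof (Rmax_r 1 (K / d)); split; [lra|].
  apply (Rmult_lt_reg_r (sel_count S om n)); [lra|].
  unfold Rdiv in *; rewrite Rmult_assoc, Rinv_l, Rmult_1_r by lra.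
  apply (Rmult_le_compat_r d) in H1; [|lra]; rewrite Rmult_assoc, Rinv_l in H1 by lra; nra.
Qed.

Lemma LimInf_sel_avg_transfer S om f g K : is_lim_seq (sel_count S om) p_infty -> 0 <= K ->
  (forall n, sel_sum S f om n - K <= sel_sum S g om n) ->
  Rbar_le 0 (LimInf_seq (sel_avg S f om)) -> Rbar_le 0 (LimInf_seq (sel_avg S g om)).
Proof.
  intros Hc HK Hfg Hf; apply LimInf_ge0_of_eventually; intros d Hd.
  destruct (LimInf_gt_eventually (sel_avg S f om) (- (d / 2)))
    as [N1 HN1]; [eapply Rbar_lt_le_trans; [|exact Hf]; simpl; lra|].
  destruct (sel_count_eventually_large S om K (d / 2) Hc) as [N2 HN2]; [lra|].
  exists (N1 + N2)%nat; intros n Hn; specialize (HN1 n ltac:(lia)).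
  destruct (HN2 n ltac:(lia)) as [Hpos Hsmall]; unfold sel_avg in *.
  assert ((sel_sum S f om n - K) / sel_count S om n <= sel_sum S g om n / sel_count S om n)
    by (unfold Rdiv; apply Rmult_le_compat_r; [left; apply Rinv_0_lt_compat|]; auto).
  unfold Rdiv in *; rewrite Rmult_minus_distr_r in H; lra.
Qed.

Lemma LimSup_sel_avg_transfer S om f g K : is_lim_seq (sel_count S om) p_infty -> 0 <= K ->
  (forall n, sel_sum S g om n <= sel_sum S f om n + K) ->
  Rbar_le (LimSup_seq (sel_avg S f om)) 0 -> Rbar_le (LimSup_seq (sel_avg S g om)) 0.
Proof.
  intros Hc HK Hfg Hf; apply LimSup_le0_of_eventually; intros d Hd.
  destruct (LimSup_lt_eventually (sel_avg S f om) (d / 2))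
    as [N1 HN1]; [eapply Rbar_le_lt_trans; [exact Hf|]; simpl; lra|].
  destruct (sel_count_eventually_large S om K (d / 2) Hc) as [N2 HN2]; [lra|].
  exists (N1 + N2)%nat; intros n Hn; specialize (HN1 n ltac:(lia)).
  destruct (HN2 n ltac:(lia)) as [Hpos Hsmall]; unfold sel_avg in *.
  assert (sel_sum S g om n / sel_count S om n <= (sel_sum S f om n + K) / sel_count S om n)
    by (unfold Rdiv; apply Rmult_le_compat_r; [left; apply Rinv_0_lt_compat|]; auto).
  unfold Rdiv in H; rewrite Rmult_plus_distr_r in H; unfold Rdiv in *; lra.
Qed.

(** * Forecasts separated on a selection *)

Lemma CH_random_separated_contra L1 H1 L2 H2 om S d : recursive_selection S ->
  is_lim_seq (sel_count S om) p_infty -> 0 < d ->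
  (forall s, S s = true -> H1 s + d <= L2 s) ->
  CH_random L1 H1 om -> CH_random L2 H2 om -> False.
Proof.
  intros HS Hc Hd Hsep R1 R2.
  destruct (R1 S HS Hc) as [_ Up]; destruct (R2 S HS Hc) as [Lo _].
  destruct (LimSup_lt_eventually (sel_avg S H1 om) (d / 2))
    as [N1 HN1]; [eapply Rbar_le_lt_trans; [exact Up|]; simpl; lra|].
  destruct (LimInf_gt_eventually (sel_avg S L2 om) (- (d / 2)))
    as [N2 HN2]; [eapply Rbar_lt_le_trans; [|exact Lo]; simpl; lra|].
  destruct (sel_count_eventually_large S om 0 d Hc Hd) as [N3 HN3].
  set (n := (N1 + N2 + N3)%nat); specialize (HN1 n ltac:(lia)); specialize (HN2 n ltac:(lia)).
  destruct (HN3 n ltac:(lia)) as [Hpos _]; unfold sel_avg in *.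
  pose proof (sel_sum_shift S H1 L2 d om n (fun k _ Hk => Hsep _ Hk)) as Hsum.
  assert (sel_sum S L2 om n / sel_count S om n <= sel_sum S H1 om n / sel_count S om n - d).
  { apply (Rmult_le_reg_r (sel_count S om n)); [exact Hpos|].
    unfold Rdiv; rewrite Rmult_minus_distr_r, !Rmult_assoc, Rinv_l by lra; lra. }
  lra.
Qed.

Lemma bet_subfair w m p : 0 < w < 1 -> (p - w) * (m - w) <= 0 ->
  p * (m / w) + (1 - p) * ((1 - m) / (1 - w)) <= 1.
Proof.
  intros Hw Hpm; assert (Hd : 0 < w * (1 - w)) by nra.
  replace (p * (m / w) + (1 - p) * ((1 - m) / (1 - w)))
    with (1 + (p - w) * (m - w) / (w * (1 - w))) by (field; lra).
  assert (E : (p - w) * (m - w) / (w * (1 - w)) * (w * (1 - w)) = (p - w) * (m - w))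
    by (field; lra).
  nra.
Qed.

Lemma midpoint_ratio_product_gt1 x y : 0 < x < y -> 1 < (x + y) / 2 / x * ((x + y) / 2 / y).
Proof.
  intros Hxy; replace ((x + y) / 2 / x * ((x + y) / 2 / y)) with (1 + (y - x) ^ 2 / (4 * x * y))
    by (field; lra).
  assert (0 < (y - x) ^ 2 / (4 * x * y))
    by (apply Rdiv_lt_0_compat; [apply pow_lt | ]; nra).
  lra.
Qed.

Lemma random_selection_bet_bounded Rn L H om S a1 a0 : Rn <> CH -> recursive_selection S ->
  nnrat a1 -> nnrat a0 ->
  (forall s, S s = true -> forall p, L s <= p <= H s -> p * a1 + (1 - p) * a0 <= 1) ->
  random Rn L H om -> ~ unbounded_on (Dcirc (selection_bet S a1 a0)) om.
Proof.
  intros HRn HS Ha1 Ha0 Hfair Hr Hu.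
  pose proof (test_supermartingale_selection_bet L H S a1 a0 (nnrat_nonneg _ Ha1)
                (nnrat_nonneg _ Ha0) Hfair) as Ht.
  pose proof (exact_rational_selection_bet S a1 a0 HS Ha1 Ha0) as Hex.
  destruct Rn; simpl in Hr; [| | |contradiction]; apply Hr.
  - exists (Dcirc (selection_bet S a1 a0)); auto using exact_rational_lsc.
  - exists (selection_bet S a1 a0); auto using lsc_multiplier_selection_bet.
  - exists (Dcirc (selection_bet S a1 a0)); auto using exact_rational_computable.
Qed.

Lemma selection_bets_product_unbounded S om a1 a0 b1 b0 :
  is_lim_seq (sel_count S om) p_infty -> 1 < a1 * b1 -> 1 < a0 * b0 ->
  forall M N, exists n, (N <= n)%nat /\
    M < Dcirc (selection_bet S a1 a0) (prefix om n) * Dcirc (selection_bet S b1 b0) (prefix om n).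
Proof.
  intros Hc H1 H0 M N; set (kappa := Rmin (a1 * b1) (a0 * b0)).
  assert (Hkappa : 1 < kappa) by (apply Rmin_glb_lt; assumption).
  destruct (pow_unbounded kappa Hkappa M) as [K HK].
  apply is_lim_seq_spec in Hc; destruct (Hc (INR K)) as [N' HN'].
  exists (N + N')%nat; split; [lia|]; specialize (HN' (N + N')%nat ltac:(lia)).
  rewrite sel_count_count_selected in HN'; apply INR_lt in HN'.
  rewrite !Dcirc_selection_bet.
  set (n1 := count_selected S true (prefix om (N + N'))) in *.
  set (n0 := count_selected S false (prefix om (N + N'))) in *.
  replace (a1 ^ n1 * a0 ^ n0 * (b1 ^ n1 * b0 ^ n0)) with ((a1 * b1) ^ n1 * (a0 * b0) ^ n0)
    by (rewrite !Rpow_mult_distr; ring).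
  apply (Rlt_le_trans _ (kappa ^ (n1 + n0))); [apply (Rlt_le_trans _ _ _ HK), Rle_pow; lia + lra|].
  rewrite pow_add; apply Rmult_le_compat; try (apply pow_le; lra);
    apply pow_incr; (split; [lra|]); [apply Rmin_l | apply Rmin_r].
Qed.

(* The first bet backs outcome 1 against forecasts [<= u], the second backs 0 against
   forecasts [>= v], both at the odds of the midpoint [m]; whatever the outcome, the product
   of the two capitals grows by a factor [> 1] at each selected round. *)
Lemma nonCH_random_separated_contra Rn L1 H1 L2 H2 om S u v : Rn <> CH ->
  recursive_selection S -> is_lim_seq (sel_count S om) p_infty ->
  nnrat u -> nnrat v -> 0 < u < v -> v < 1 -> (forall s, S s = true -> H1 s <= u /\ v <= L2 s) ->
  random Rn L1 H1 om -> random Rn L2 H2 om -> False.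
Proof.
  intros HRn HS Hc Hu Hv Huv Hv1 Hsep R1 R2; set (m := (u + v) / 2).
  assert (Hm : nnrat m) by (apply nnrat_div; [apply nnrat_add | apply nnrat_two | lra]; auto).
  assert (Hm1 : nnrat (1 - m)) by (apply nnrat_one_minus; [exact Hm | unfold m; lra]).
  assert (Hu1 : nnrat (1 - u)) by (apply nnrat_one_minus; [exact Hu | lra]).
  assert (Hv1' : nnrat (1 - v)) by (apply nnrat_one_minus; [exact Hv | lra]).
  set (D1 := selection_bet S (m / u) ((1 - m) / (1 - u))).
  set (D2 := selection_bet S (m / v) ((1 - m) / (1 - v))).
  assert (B1 : ~ unbounded_on (Dcirc D1) om).
  { apply (random_selection_bet_bounded Rn L1 H1); auto; try (apply nnrat_div; auto; lra).
    intros s Hs p Hp; apply bet_subfair; [lra | specialize (Hsep s Hs); unfold m; nra]. }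
  assert (B2 : ~ unbounded_on (Dcirc D2) om).
  { apply (random_selection_bet_bounded Rn L2 H2); auto; try (apply nnrat_div; auto; lra).
    intros s Hs p Hp; apply bet_subfair; [lra | specialize (Hsep s Hs); unfold m; nra]. }
  assert (Hk0 : 1 < (1 - m) / (1 - u) * ((1 - m) / (1 - v))).
  { replace (1 - m) with ((1 - v + (1 - u)) / 2) by (unfold m; field).
    rewrite Rmult_comm; apply midpoint_ratio_product_gt1; lra. }
  destruct (LimSup_mult_p_infty (fun n => Dcirc D1 (prefix om n)) (fun n => Dcirc D2 (prefix om n)))
    as [U|U]; [| | | exact (B1 U) | exact (B2 U)].
  1, 2: intros; apply selection_bet_nonneg; apply nnrat_nonneg, nnrat_div; auto; lra.
  apply selection_bets_product_unbounded; [exact Hc | | exact Hk0].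
  apply midpoint_ratio_product_gt1; lra.
Qed.

Lemma random_separated_contra Rn L1 H1 L2 H2 om S u v : recursive_selection S ->
  (forall N, exists n, (N <= n)%nat /\ S (prefix om n) = true) ->
  nnrat u -> nnrat v -> 0 < u < v -> v < 1 -> (forall s, S s = true -> H1 s <= u /\ v <= L2 s) ->
  random Rn L1 H1 om -> random Rn L2 H2 om -> False.
Proof.
  intros HS Hfreq Hu Hv Huv Hv1 Hsep; pose proof (sel_count_p_infty S om Hfreq) as Hc.
  destruct Rn;
    [apply (nonCH_random_separated_contra _ L1 H1 L2 H2 om S u v); solve [discriminate | auto] ..|].
  apply (CH_random_separated_contra L1 H1 L2 H2 om S (v - u) HS Hc); [lra|].
  intros s Hs; specialize (Hsep s Hs); lra.
Qed.

Lemma liminf_ge_of_random_interval Rn lo hi om a b :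
  is_FS lo hi -> precise lo hi -> computable_FS lo hi -> random Rn lo hi om ->
  0 <= a -> a <= b -> b <= 1 -> random Rn (fun _ => a) (fun _ => b) om ->
  Rbar_le a (LimInf_seq (fun n => lo (prefix om n))).
Proof.
  intros Hfs Hpr [Hlo _] Rphi Ha Hab Hb Rab; apply Rbar_not_lt_le; intros Hlt.
  pose proof (LimInf_ge_const (fun n => lo (prefix om n)) 0 (fun n => proj1 (Hfs _))) as H0.
  destruct (LimInf_seq (fun n => lo (prefix om n))) as [l| |] eqn:E;
    simpl in Hlt, H0; try contradiction.
  destruct (exists_nnrat_between l a) as [u [Hu Hlu]]; [lra|].
  destruct (exists_nnrat_between u a) as [v [Hv Huv]]; [lra|].
  destruct (separating_selection_below lo ((l + u) / 2) u Hlo) as [S [HS [Hin Hout]]]; [lra|].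
  apply (random_separated_contra Rn lo hi (fun _ => a) (fun _ => b) om S u v HS); auto; try lra.
  - intros N; destruct (LimInf_lt_frequently (fun n => lo (prefix om n)) ((l + u) / 2))
      with N as [n [Hn Hlo_n]]; [rewrite E; simpl; lra|].
    exists n; split; [exact Hn | apply Hin; lra].
  - intros s Hs; rewrite <- Hpr; specialize (Hout s Hs); lra.
Qed.

Lemma limsup_le_of_random_interval Rn lo hi om a b :
  is_FS lo hi -> precise lo hi -> computable_FS lo hi -> random Rn lo hi om ->
  0 <= a -> a <= b -> b <= 1 -> random Rn (fun _ => a) (fun _ => b) om ->
  Rbar_le (LimSup_seq (fun n => hi (prefix om n))) b.
Proof.
  intros Hfs Hpr [Hlo _] Rphi Ha Hab Hb Rab; apply Rbar_not_lt_le; intros Hlt.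
  pose proof (LimSup_le_const (fun n => hi (prefix om n)) 1 (fun n => proj2 (proj2 (Hfs _)))) as H1.
  destruct (LimSup_seq (fun n => hi (prefix om n))) as [l| |] eqn:E;
    simpl in Hlt, H1; try contradiction.
  destruct (exists_nnrat_between b l) as [u [Hu Hbu]]; [lra|].
  destruct (exists_nnrat_between u l) as [v [Hv Huv]]; [lra|].
  destruct (separating_selection_above lo v ((v + l) / 2) Hlo) as [S [HS [Hin Hout]]]; [lra|].
  apply (random_separated_contra Rn (fun _ => a) (fun _ => b) lo hi om S u v HS); auto; try lra.
  - intros N; destruct (LimSup_gt_frequently (fun n => hi (prefix om n)) ((v + l) / 2))
      with N as [n [Hn Hhi_n]]; [rewrite E; simpl; lra|].
    exists n; split; [exact Hn | apply Hin; rewrite Hpr; lra].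
  - intros s Hs; specialize (Hout s Hs); lra.
Qed.

(** * Stopped tests *)

Definition extends (u s : list bool) : bool :=
  if list_eq_dec Bool.bool_dec (firstn (length u) s) u then true else false.

Definition survives (S : list bool -> bool) (n0 : nat) (s : list bool) : bool :=
  forallb (fun k => (k <? n0)%nat || S (firstn k s)) (seq 0 (length s)).

Lemma extends_spec u s : extends u s = true <-> firstn (length u) s = u.
Proof. unfold extends; destruct (list_eq_dec _ _ _); split; congruence. Qed.

Lemma extends_length u s : extends u s = true -> (length u <= length s)%nat.
Proof.
  intros E; apply extends_spec in E; apply (f_equal (@length bool)) in E.
  rewrite length_firstn in E; lia.
Qed.

Lemma extends_snoc_keep u s x : extends u s = true -> extends u (s ++ [x]) = true.
Proof.
  intros E; pose proof (extends_length u s E); apply extends_spec in E; apply extends_spec.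
  rewrite firstn_snoc_le by lia; exact E.
Qed.

Lemma extends_snoc u s x : extends u (s ++ [x]) = true -> extends u s = true \/ s ++ [x] = u.
Proof.
  intros E; pose proof (extends_length u _ E) as Hl; rewrite length_app in Hl; simpl in Hl.
  apply extends_spec in E; destruct (le_lt_dec (length u) (length s)).
  - left; apply extends_spec; rewrite firstn_snoc_le in E by lia; exact E.
  - right; rewrite firstn_all2 in E by (rewrite length_app; simpl; lia); exact E.
Qed.

Lemma extends_nil u : u <> [] -> extends u [] = false.
Proof.
  intros Hu; destruct (extends u []) eqn:E; [|reflexivity].
  apply extends_length in E; destruct u; [congruence | simpl in E; lia].
Qed.

Lemma extends_prefix om n0 n : (n0 <= n)%nat -> extends (prefix om n0) (prefix om n) = true.
Proof. intros H; apply extends_spec; rewrite length_prefix, firstn_prefix; auto. Qed.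

Lemma forallb_ext_in {A} (f g : A -> bool) l :
  (forall x, In x l -> f x = g x) -> forallb f l = forallb g l.
Proof. induction l; simpl; intros H; [reflexivity|]; rewrite H, IHl; auto. Qed.

Lemma survives_snoc S n0 s x : (n0 <= length s)%nat ->
  survives S n0 (s ++ [x]) = survives S n0 s && S s.
Proof.
  intros Hn; unfold survives; rewrite length_app, Nat.add_1_r, seq_S, forallb_app; simpl.
  rewrite firstn_snoc_le, firstn_all by lia.
  replace (length s <? n0)%nat with false by (symmetry; apply Nat.ltb_ge; lia).
  rewrite andb_true_r; f_equal; apply forallb_ext_in; intros k Hk; apply in_seq in Hk.
  rewrite firstn_snoc_le by lia; reflexivity.
Qed.

Lemma survives_short S n0 s : (length s <= n0)%nat -> survives S n0 s = true.
Proof.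
  intros Hs; apply forallb_forall; intros k Hk; apply in_seq in Hk.
  replace (k <? n0)%nat with true by (symmetry; apply Nat.ltb_lt; lia); reflexivity.
Qed.

Lemma survives_prefix S om n0 n : (forall k, (n0 <= k)%nat -> S (prefix om k) = true) ->
  survives S n0 (prefix om n) = true.
Proof.
  intros HS; apply forallb_forall; intros k Hk; apply in_seq in Hk; rewrite length_prefix in Hk.
  destruct (Nat.ltb_spec k n0); [reflexivity|]; rewrite firstn_prefix by lia.
  rewrite HS by lia; apply orb_true_r.
Qed.

Lemma recursive_guard_extends u : recursive_guard code_sit (extends u).
Proof.
  exists (fun m => chi_eq (code_firstn m (length u)) (code_sit u)); split.
  - apply recursive1_iff; unfold recursive1; solve_recursive.
  - intros s; rewrite chi_eq_spec, code_firstn_spec; unfold extends.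
    destruct (Nat.eqb_spec (code_sit (firstn (length u) s)) (code_sit u)) as [C|C];
      destruct (list_eq_dec _ _ _) as [C'|C']; try reflexivity.
    + apply code_sit_inj in C; contradiction.
    + rewrite C' in C; contradiction.
Qed.

Lemma b2n_forallb (f : nat -> bool) l :
  b2n (forallb f l) = (1 - sg (list_sum (map (fun k => 1 - b2n (f k)) l)))%nat.
Proof.
  induction l as [|k l IH]; [reflexivity|]; cbn [forallb map list_sum].
  rewrite !sg_spec in *; destruct (f k); simpl; [exact IH | reflexivity].
Qed.

Lemma recursive_guard_survives S n0 :
  recursive_selection S -> recursive_guard code_sit (survives S n0).
Proof.
  intros [hS [HhS HS]]; rewrite <- recursive1_iff in HhS.
  exists (fun m => 1 - sg (bsum (fun k m => (1 - chi_lt k n0) * (1 - hS (code_firstn m k)))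
                                (code_length m) m))%nat; split.
  - apply recursive1_iff; unfold recursive1; solve_recursive.
  - intros s; rewrite bsum_seq, code_length_spec; unfold survives; rewrite b2n_forallb.
    do 3 f_equal; apply map_ext; intros k.
    rewrite code_firstn_spec, HS, chi_lt_spec.
    destruct (k <? n0)%nat, (S (firstn k s)); reflexivity.
Qed.

(* [T] is only followed on rounds selected by [S] after [u], where the forecast lies in
   [[A, B]]; elsewhere the capital stays constant or drops to 0. *)
Definition stopped_process (S : list bool -> bool) (u : list bool) (r : R) (T : list bool -> R)
  (s : list bool) : R :=
  if extends u s then (if survives S (length u) s then r * T s else 0) else 1.

Definition stopped_multiplier (S : list bool -> bool) (u : list bool) (D : list bool -> bool -> R)
  (s : list bool) (x : bool) : R :=
  if extends u s then (if S s then D s x else 0) else 1.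

Section Stopping.

Variables (S : list bool -> bool) (u : list bool) (L H : list bool -> R) (A B : R).
Hypothesis u_nonempty : u <> [].
Hypothesis is_FS_LH : is_FS L H.
Hypothesis selected_inside : forall s, S s = true -> A <= L s /\ H s <= B.

Lemma extends_snoc_outside s x : extends u s = false -> extends u (s ++ [x]) = true -> s ++ [x] = u.
Proof. intros E E'; destruct (extends_snoc u s x E') as [C|C]; [congruence | exact C]. Qed.

Section Process.

Variables (r : R) (T : list bool -> R).
Hypothesis r_pos : 0 < r.
Hypothesis r_T_u : r * T u <= 1.
Hypothesis T_test : test_supermartingale (fun _ => A) (fun _ => B) T.

Lemma stopped_process_test : test_supermartingale L H (stopped_process S u r T).
Proof.
  destruct T_test as [HTs [HTn _]]; split; [|split].
  - intros s p Hp; pose proof (is_FS_LH s) as HLs; destruct (extends u s) eqn:E.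
    + unfold stopped_process; rewrite E, !(extends_snoc_keep u s) by exact E.
      rewrite !survives_snoc by (apply extends_length; exact E).
      pose proof (HTn s); destruct (survives S (length u) s); [destruct (S s) eqn:ES|]; simpl.
      * destruct (selected_inside s ES); specialize (HTs s p ltac:(lra)); simpl in HTs; nra.
      * nra.
      * lra.
    + assert (Hle : forall x, stopped_process S u r T (s ++ [x]) <= 1).
      { intros x; unfold stopped_process; destruct (extends u (s ++ [x])) eqn:E'; [|lra].
        rewrite (extends_snoc_outside s x E E'), survives_short by lia; exact r_T_u. }
      replace (stopped_process S u r T s) with 1
        by (unfold stopped_process; rewrite E; reflexivity).
      pose proof (Hle true); pose proof (Hle false); nra.
  - intros s; unfold stopped_process; pose proof (HTn s).
    destruct (extends u s), (survives S (length u) s); nra.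
  - unfold stopped_process; rewrite extends_nil by exact u_nonempty; reflexivity.
Qed.

Lemma stopped_process_unbounded om n0 : u = prefix om n0 ->
  (forall k, (n0 <= k)%nat -> S (prefix om k) = true) ->
  unbounded_on T om -> unbounded_on (stopped_process S u r T) om.
Proof.
  intros Eu HS Hunb; apply LimSup_p_infty_intro; intros M N.
  destruct (LimSup_p_infty_frequently _ Hunb (M / r) (N + n0)) as [n [Hn HM]].
  exists n; split; [lia|]; unfold stopped_process.
  rewrite Eu, extends_prefix, length_prefix, survives_prefix by (auto; lia).
  apply (Rmult_lt_compat_l r) in HM; [|exact r_pos].
  unfold Rdiv in HM; rewrite Rmult_comm, Rmult_assoc, Rinv_l, Rmult_1_r in HM by lra; exact HM.
Qed.

End Process.

Section Multiplier.

Variable D : list bool -> bool -> R.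
Hypothesis D_test : test_supermartingale (fun _ => A) (fun _ => B) (Dcirc D).
Hypothesis Dcirc_u_pos : 0 < Dcirc D u.

Lemma Dcirc_stopped_outside s : extends u s = false -> Dcirc (stopped_multiplier S u D) s = 1.
Proof.
  induction s as [|x s IH] using rev_ind; intros E; [reflexivity|].
  assert (Es : extends u s = false)
    by (destruct (extends u s) eqn:Es; [rewrite extends_snoc_keep in E by exact Es|]; congruence).
  rewrite Dcirc_snoc, IH by exact Es; unfold stopped_multiplier; rewrite Es; ring.
Qed.

Lemma Dcirc_stopped_inside s : extends u s = true ->
  Dcirc (stopped_multiplier S u D) s =
  if survives S (length u) s then Dcirc D s / Dcirc D u else 0.
Proof.
  induction s as [|x s IH] using rev_ind; intros E.
  - rewrite extends_nil in E by exact u_nonempty; discriminate.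
  - rewrite Dcirc_snoc; destruct (extends u s) eqn:Es.
    + rewrite IH, survives_snoc, Dcirc_snoc by (auto; apply extends_length; exact Es).
      unfold stopped_multiplier; rewrite Es.
      destruct (survives S (length u) s), (S s); simpl; field_simplify; lra.
    + rewrite (extends_snoc_outside s x Es E), Dcirc_stopped_outside, survives_short by (auto; lia).
      unfold stopped_multiplier; rewrite Es; field; lra.
Qed.

Lemma Dcirc_stopped_nonneg s : 0 <= Dcirc (stopped_multiplier S u D) s.
Proof.
  destruct (extends u s) eqn:E; [|rewrite Dcirc_stopped_outside by exact E; lra].
  rewrite Dcirc_stopped_inside by exact E; destruct (survives S (length u) s); [|lra].
  destruct D_test as [_ [HDn _]]; apply Rdiv_le_0_compat; auto.
Qed.

Lemma stopped_multiplier_test : test_supermartingale L H (Dcirc (stopped_multiplier S u D)).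
Proof.
  split; [|split; [exact Dcirc_stopped_nonneg | reflexivity]].
  intros s p Hp; rewrite !Dcirc_snoc; pose proof (is_FS_LH s); pose proof (Dcirc_stopped_nonneg s).
  set (c := Dcirc (stopped_multiplier S u D) s) in *.
  assert (HD' : forall x, stopped_multiplier S u D s x =
                          if extends u s then (if S s then D s x else 0) else 1) by reflexivity.
  rewrite !HD'; destruct (extends u s) eqn:E; [|lra].
  destruct (S s) eqn:ES; [|nra].
  unfold c; rewrite Dcirc_stopped_inside by exact E.
  destruct (survives S (length u) s); [|lra].
  destruct D_test as [HDs _]; destruct (selected_inside s ES).
  specialize (HDs s p ltac:(lra)); simpl in HDs; rewrite !Dcirc_snoc in HDs.
  assert (Hinv : 0 < / Dcirc D u) by (apply Rinv_0_lt_compat; exact Dcirc_u_pos).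
  unfold Rdiv; nra.
Qed.

Lemma stopped_multiplier_unbounded om n0 : u = prefix om n0 ->
  (forall k, (n0 <= k)%nat -> S (prefix om k) = true) ->
  unbounded_on (Dcirc D) om -> unbounded_on (Dcirc (stopped_multiplier S u D)) om.
Proof.
  intros Eu HS Hunb; apply LimSup_p_infty_intro; intros M N.
  destruct (LimSup_p_infty_frequently _ Hunb (M * Dcirc D u) (N + n0)) as [n [Hn HM]].
  exists n; split; [lia|].
  assert (Ext : extends u (prefix om n) = true) by (rewrite Eu; apply extends_prefix; lia).
  assert (Surv : survives S (length u) (prefix om n) = true)
    by (rewrite Eu, length_prefix; apply survives_prefix, HS).
  rewrite (Dcirc_stopped_inside _ Ext), Surv.
  apply (Rmult_lt_reg_r (Dcirc D u)); [exact Dcirc_u_pos|].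
  unfold Rdiv; rewrite Rmult_assoc, Rinv_l, Rmult_1_r by lra; exact HM.
Qed.

End Multiplier.

End Stopping.

Lemma recursive_Q_stopped_process S u m q : recursive_selection S -> (1 <= m)%nat ->
  recursive_Q code_sit q ->
  recursive_Q code_sit (fun s k => if extends u s && survives S (length u) s then / INR m * q s k
                                   else if extends u s then 0 else 1).
Proof.
  intros HS Hm Hq; apply recursive_Q_if.
  - apply recursive_guard_andb;
      [apply recursive_guard_extends | apply recursive_guard_survives, HS].
  - apply recursive_Q_scale; assumption.
  - apply recursive_Q_if; [apply recursive_guard_extends | exact (recursive_Q_const _ 0) |
                           exact (recursive_Q_const _ 1)].
Qed.

Lemma lsc_stopped_process S u m T : recursive_selection S -> (1 <= m)%nat ->
  lower_semicomputable code_sit T ->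
  lower_semicomputable code_sit (stopped_process S u (/ INR m) T).
Proof.
  intros HS Hm [q [Hq [Hmono Hcv]]].
  assert (0 < / INR m) by (apply Rinv_0_lt_compat, lt_0_INR; lia).
  eexists; split; [apply (recursive_Q_stopped_process S u m q HS Hm Hq)|]; split.
  - intros s k; destruct (extends u s), (survives S (length u) s); simpl; try lra.
    apply Rmult_le_compat_l; [lra | apply Hmono].
  - intros s; unfold stopped_process; destruct (extends u s), (survives S (length u) s);
      simpl; [apply CV_mult; [apply Un_cv_const | apply Hcv] | apply Un_cv_const ..].
Qed.

Lemma computable_stopped_process S u m T : recursive_selection S -> (1 <= m)%nat ->
  computable_map code_sit T ->
  computable_map code_sit (stopped_process S u (/ INR m) T).
Proof.
  intros HS Hm [q [Hq Happrox]].
  assert (0 < / INR m <= 1) by (split; [apply Rinv_0_lt_compat, lt_0_INR; lia |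
                                       rewrite <- Rinv_1; apply Rinv_le_contravar; [lra|];
                                       apply (le_INR 1); lia]).
  eexists; split; [apply (recursive_Q_stopped_process S u m q HS Hm Hq)|].
  intros s n; unfold stopped_process; destruct (extends u s), (survives S (length u) s); simpl;
    [|rewrite Rminus_diag, Rabs_R0; apply Rinv_0_lt_compat, pow_lt; lra ..].
  rewrite <- Rmult_minus_distr_l, Rabs_mult, Rabs_right by lra.
  specialize (Happrox s n); pose proof (Rabs_pos (T s - q s n)); nra.
Qed.

Lemma lsc_stopped_multiplier S u D : recursive_selection S -> lsc_multiplier D ->
  lsc_multiplier (stopped_multiplier S u D).
Proof.
  intros HS [q [Hq [Hmono Hcv]]].
  exists (fun p k => if extends u (fst p) && S (fst p) then q p k
                     else if extends u (fst p) then 0 else 1); split; [|split].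
  - apply recursive_Q_if; [apply (recursive_guard_fst (fun s => extends u s && S s)),
                           recursive_guard_andb; [apply recursive_guard_extends | exact HS] |
                           exact Hq |].
    apply recursive_Q_if; [apply (recursive_guard_fst (extends u)), recursive_guard_extends |
                           exact (recursive_Q_const _ 0) | exact (recursive_Q_const _ 1)].
  - intros p k; destruct (extends u (fst p)), (S (fst p)); simpl; try lra; apply Hmono.
  - intros [s x]; unfold stopped_multiplier; simpl fst; simpl snd.
    destruct (extends u s), (S s); simpl; [apply (Hcv (s, x)) | apply Un_cv_const ..].
Qed.

Lemma CH_random_coarsening L H A B om : is_FS L H -> 0 <= A -> A <= B -> B <= 1 ->
  (exists K, forall k, (K <= k)%nat -> A <= L (prefix om k) /\ H (prefix om k) <= B) ->
  CH_random L H om -> CH_random (fun _ => A) (fun _ => B) om.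
Proof.
  intros HLH HA HAB HB [K HK] Rphi S HS Hc; destruct (Rphi S HS Hc) as [Lo Up]; split.
  - apply (LimInf_sel_avg_transfer S om L (fun _ => A) (INR K) Hc (pos_INR K)); [|exact Lo].
    intros n; apply sel_sum_eventually_le; [intros k Hk _; apply HK, Hk|].
    intros s; pose proof (HLH s); lra.
  - apply (LimSup_sel_avg_transfer S om H (fun _ => B) (INR K) Hc (pos_INR K)); [|exact Up].
    intros n; enough (sel_sum S (fun _ => B) om n - INR K <= sel_sum S H om n) by lra.
    apply sel_sum_eventually_le; [intros k Hk _; apply HK, Hk|].
    intros s; pose proof (HLH s); lra.
Qed.

Lemma Dcirc_prefix_pos D om n0 : (forall s, 0 <= Dcirc D s) -> unbounded_on (Dcirc D) om ->
  0 < Dcirc D (prefix om n0).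
Proof.
  intros Hnn Hunb; destruct (Hnn (prefix om n0)) as [P|Z]; [exact P|exfalso].
  assert (Zero : forall n, (n0 <= n)%nat -> Dcirc D (prefix om n) = 0).
  { induction 1; [auto|]; rewrite prefix_S, Dcirc_snoc, IHle; ring. }
  destruct (LimSup_p_infty_frequently _ Hunb 0 n0) as [n [Hn Hpos]].
  rewrite Zero in Hpos by exact Hn; lra.
Qed.

Lemma random_coarsening Rn L H A B om S : is_FS L H -> 0 <= A -> A <= B -> B <= 1 ->
  recursive_selection S -> (exists n0, forall k, (n0 <= k)%nat -> S (prefix om k) = true) ->
  (forall s, S s = true -> A <= L s /\ H s <= B) ->
  random Rn L H om -> random Rn (fun _ => A) (fun _ => B) om.
Proof.
  intros HLH HA HAB HB HS [n0 Hn0] Hsel Rphi.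
  destruct Rn; simpl in *;
    [| | | apply (CH_random_coarsening L H); auto; exists n0; intros k Hk; apply Hsel, Hn0, Hk].
  all: set (u := prefix om (Datatypes.S n0)).
  all: assert (Hu : u <> []) by (unfold u; rewrite prefix_S; destruct (prefix om n0); discriminate).
  all: assert (Hn1 : forall k, (Datatypes.S n0 <= k)%nat -> S (prefix om k) = true)
         by (intros; apply Hn0; lia).
  - intros [T [Hlsc [HT Hunb]]]; apply Rphi.
    destruct (exists_inv_nat_scale (T u)) as [m [Hm [Hr HrT]]].
    exists (stopped_process S u (/ INR m) T); split; [|split].
    + apply lsc_stopped_process; assumption.
    + apply (stopped_process_test S u L H A B); assumption.
    + eapply stopped_process_unbounded; eauto; reflexivity.
  - intros [D [HD [HT Hunb]]]; apply Rphi.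
    pose proof (Dcirc_prefix_pos D om (Datatypes.S n0) (proj1 (proj2 HT)) Hunb) as Hpos.
    exists (stopped_multiplier S u D); split; [|split].
    + apply lsc_stopped_multiplier; assumption.
    + apply (stopped_multiplier_test S u L H A B); assumption.
    + eapply stopped_multiplier_unbounded; eauto; reflexivity.
  - intros [T [Hcomp [HT Hunb]]]; apply Rphi.
    destruct (exists_inv_nat_scale (T u)) as [m [Hm [Hr HrT]]].
    exists (stopped_process S u (/ INR m) T); split; [|split].
    + apply computable_stopped_process; assumption.
    + apply (stopped_process_test S u L H A B); assumption.
    + eapply stopped_process_unbounded; eauto; reflexivity.
Qed.

(** * Bounds on [I_R] *)

Lemma recursive_selection_true : recursive_selection (fun _ => true).
Proof.
  exists (fun _ => 1%nat); split; [|reflexivity].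
  apply recursive1_iff; unfold recursive1; solve_recursive.
Qed.

Lemma random_unit_interval Rn L H om : is_FS L H -> random Rn L H om ->
  random Rn (fun _ => 0) (fun _ => 1) om.
Proof.
  intros HLH; apply (random_coarsening Rn L H 0 1 om (fun _ => true) HLH); try lra;
    [apply recursive_selection_true | exists 0%nat; reflexivity |].
  intros s _; pose proof (HLH s); lra.
Qed.

Lemma liminf_le_of_in_I_R Rn lo hi om x :
  is_FS lo hi -> precise lo hi -> computable_FS lo hi -> random Rn lo hi om ->
  in_I_R Rn om x -> Rbar_le (LimInf_seq (fun n => lo (prefix om n))) x.
Proof.
  intros Hfs Hpr [Hlo _] Rphi HI; apply Rbar_not_lt_le; intros Hlt.
  destruct (Rlt_dec x 0) as [Hx|Hx].
  { destruct (HI 0 1); try lra; exact (random_unit_interval Rn lo hi om Hfs Rphi). }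
  destruct (Rbar_lt_interpolate_above x _ Hlt) as [a [c [Hxac Hc]]].
  destruct (LimInf_gt_eventually _ c Hc) as [n0 Hn0].
  assert (c < 1) by (specialize (Hn0 n0 (le_n _)); pose proof (Hfs (prefix om n0)); lra).
  destruct (separating_selection_above lo a c Hlo) as [S [HS [Hin Hout]]]; [lra|].
  destruct (HI a 1); try lra.
  apply (random_coarsening Rn lo hi a 1 om S Hfs); try lra; auto.
  - exists n0; intros k Hk; apply Hin; specialize (Hn0 k Hk); lra.
  - intros s Hs; specialize (Hout s Hs); pose proof (Hfs s); lra.
Qed.

Lemma le_limsup_of_in_I_R Rn lo hi om x :
  is_FS lo hi -> precise lo hi -> computable_FS lo hi -> random Rn lo hi om ->
  in_I_R Rn om x -> Rbar_le x (LimSup_seq (fun n => hi (prefix om n))).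
Proof.
  intros Hfs Hpr [Hlo _] Rphi HI; apply Rbar_not_lt_le; intros Hlt.
  destruct (Rlt_dec 1 x) as [Hx|Hx].
  { destruct (HI 0 1); try lra; exact (random_unit_interval Rn lo hi om Hfs Rphi). }
  destruct (Rbar_lt_interpolate_below _ x Hlt) as [c [a [Hc Hcax]]].
  destruct (LimSup_lt_eventually _ c Hc) as [n0 Hn0].
  assert (0 < c) by (specialize (Hn0 n0 (le_n _)); pose proof (Hfs (prefix om n0)); lra).
  destruct (separating_selection_below lo c a Hlo) as [S [HS [Hin Hout]]]; [lra|].
  destruct (HI 0 a); try lra.
  apply (random_coarsening Rn lo hi 0 a om S Hfs); try lra; auto.
  - exists n0; intros k Hk; apply Hin; specialize (Hn0 k Hk); rewrite Hpr; lra.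
  - intros s Hs; specialize (Hout s Hs); pose proof (Hfs s); rewrite <- Hpr; lra.
Qed.

Theorem theorem1 (Rn : notion) (lo hi : list bool -> R) (om : nat -> bool) :
  is_FS lo hi -> precise lo hi -> computable_FS lo hi ->
  random Rn lo hi om ->
  forall x : R, in_I_R Rn om x <-> in_I_phi lo hi om x.
Proof.
  intros Hfs Hpr Hcomp Rphi x; split.
  - intros HI; split.
    + exact (liminf_le_of_in_I_R Rn lo hi om x Hfs Hpr Hcomp Rphi HI).
    + exact (le_limsup_of_in_I_R Rn lo hi om x Hfs Hpr Hcomp Rphi HI).
  - intros [Hinf Hsup] a b Ha Hab Hb Rab; split.
    + change (Rbar_le a x); eapply Rbar_le_trans; [|exact Hinf].
      exact (liminf_ge_of_random_interval Rn lo hi om a b Hfs Hpr Hcomp Rphi Ha Hab Hb Rab).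
    + change (Rbar_le x b); eapply Rbar_le_trans; [exact Hsup|].
      exact (limsup_le_of_random_interval Rn lo hi om a b Hfs Hpr Hcomp Rphi Ha Hab Hb Rab).
Qed.
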